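(* Assume (A1) and (A2). Then there exists a constant $c>0$ such that for all $\mathbf{z}\in\mathbb{W}(b^* )^2$ and $\boldsymbol\vartheta\in I_{2\pi}^2$, $$\left|(\Gamma(\mathbf{z})-\Gamma(\mathbf{z}+\boldsymbol\vartheta))\cdot\Big(\frac{\partial\Gamma}{\partial z_0}\times\frac{\partial\Gamma}{\partial z_1}\Big)(\mathbf{z}+\boldsymbol\vartheta)\right|\le c\,(\zeta(\boldsymbol\vartheta))^2.$$
   Context: $I_{2\pi}=[0,2\pi)$. Let $\Gamma=[\gamma_0,\gamma_1,\gamma_2]^T:\mathbb{R}^2\to\mathbb{R}^3$ have $2\pi$-biperiodic differentiable components, with $\Gamma|_{I_{2\pi}^2}$ parametrizing the boundary of a bounded open region in $\mathbb{R}^3$ that is $C^\infty$-diffeomorphic to a torus. For $\mathbf{a},\mathbf{b}\in\mathbb{C}^3$, $\mathbf{a}\cdot\mathbf{b}=\sum_ja_jb_j$ (no conjugation), $\mathbf{a}\times\mathbf{b}=[a_1b_2-a_2b_1,a_2b_0-a_0b_2,a_0b_1-a_1b_0]^T$, $\|\mathbf{a}\|_2=(\sum_j|a_j|^2)^{1/2}$; for matrices $\|\cdot\|_2$ is the induced operator norm. For $\boldsymbol\theta\in\mathbb{R}^2$, $\zeta(\boldsymbol\theta)=\sqrt{\mathrm{dist}(\theta_0,2\pi\mathbb{Z})^2+\mathrm{dist}(\theta_1,2\pi\mathbb{Z})^2}$ (for $\boldsymbol\theta\in I_{2\pi}^2$ this is $\sqrt{(\min\{\theta_0,2\pi-\theta_0\})^2+(\min\{\theta_1,2\pi-\theta_1\})^2}$).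 For $r>0$, $\mathbb{W}(r)=\{z\in\mathbb{C}:|\mathrm{Im}\,z|<r\}$. (A1): there is $C_0>0$ with $\|\Gamma(\boldsymbol\theta)-\Gamma(\boldsymbol\eta)\|_2\ge C_0\zeta(\boldsymbol\theta-\boldsymbol\eta)$ for all $\boldsymbol\theta,\boldsymbol\eta\in I_{2\pi}^2$. (A2): there is $R_0>0$ such that for each $j$ the ($2\pi$-biperiodic) function $\gamma_j$ extends analytically to the closure of $\mathbb{W}(R_0)^2\subset\mathbb{C}^2$ (extensions still denoted $\gamma_j$, $\Gamma$; $\frac{\partial\Gamma}{\partial z_\iota}=[\frac{\partial\gamma_0}{\partial z_\iota},\frac{\partial\gamma_1}{\partial z_\iota},\frac{\partial\gamma_2}{\partial z_\iota}]^T$ are complex partial derivatives). For $\mathbf{z}=[z_0,z_1]$, $\mathrm{Re}(\mathbf{z})=[\mathrm{Re}\,z_0,\mathrm{Re}\,z_1]$; $D\gamma_j$ is the complex gradient and $\mathbf{H}_j$ the $2\times2$ complex Hessian of $\gamma_j$. Let $M_{0,j}=\sup_{\mathbf{z}\in\mathbb{W}(R_0)^2}\|D\gamma_j(\mathbf{z})+D\gamma_j(\mathrm{Re}(\mathbf{z}))\|_2$, $M_{1,j}=\sup_{\mathbf{z}\in\mathbb{W}(R_0)^2}\|\mathbf{H}_j(\mathbf{z})\|_2$, $M_0=(\sum_jM_{0,j}^2)^{1/2}$, $M_1=(\sum_jM_{1,j}^2)^{1/2}$. Fix $b$ with $0<b<\min\{\frac{C_0^2}{\sqrt2M_0M_1},\frac{R_0}{2}\}$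 and let $b^*=\frac12\big(b+\min\{\frac{C_0^2}{\sqrt2M_0M_1},\frac{R_0}{2}\}\big)$. *)

From Stdlib Require Import Reals ZArith ClassicalEpsilon.
From Coquelicot Require Import Coquelicot.

Open Scope R_scope.

Definition cadd2 (z w : C * C) : C * C := (Cplus (fst z) (fst w), Cplus (snd z) (snd w)).
Definition rpt (t s : R) : C * C := (RtoC t, RtoC s).
Definition ReZ (z : C * C) : C * C := (RtoC (Re (fst z)), RtoC (Re (snd z))).

Definition inW (r : R) (z : C * C) : Prop :=
  Rabs (Im (fst z)) < r /\ Rabs (Im (snd z)) < r.
Definition inWcl (r : R) (z : C * C) : Prop :=
  Rabs (Im (fst z)) <= r /\ Rabs (Im (snd z)) <= r.

(** f : C^2 -> C is analytic (= holomorphic, i.e. complex-Frechet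
    differentiable) on an open set containing S. *)
Definition analytic_near (S : C * C -> Prop) (f : C * C -> C) : Prop :=
  exists U : C * C -> Prop, open U /\ (forall z, S z -> U z) /\
    forall z, U z -> ex_filterdiff (K := C_AbsRing) f (locally z).

Definition pd0 (f : C * C -> C) (z : C * C) : C :=
  epsilon (inhabits (RtoC 0)) (fun l : C =>
    is_derive (K := C_AbsRing) (V := C_NormedModule) (fun w : C => f (w, snd z)) (fst z) l).
Definition pd1 (f : C * C -> C) (z : C * C) : C :=
  epsilon (inhabits (RtoC 0)) (fun l : C =>
    is_derive (K := C_AbsRing) (V := C_NormedModule) (fun w : C => f (fst z, w)) (snd z) l).

Definition vnorm2 (a b : C) : R := sqrt (Cmod a ^ 2 + Cmod b ^ 2).
Definition vnorm3 (a : C * C * C) : R :=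
  let '(a0, a1, a2) := a in sqrt (Cmod a0 ^ 2 + Cmod a1 ^ 2 + Cmod a2 ^ 2).

Definition opnorm22 (a b c d : C) : R :=
  real (Lub_Rbar (fun r => exists v0 v1 : C, vnorm2 v0 v1 = 1 /\
          r = vnorm2 (Cplus (Cmult a v0) (Cmult b v1)) (Cplus (Cmult c v0) (Cmult d v1)))).

Definition grad_norm_sum (f : C * C -> C) (z : C * C) : R :=
  vnorm2 (Cplus (pd0 f z) (pd0 f (ReZ z))) (Cplus (pd1 f z) (pd1 f (ReZ z))).
Definition hess_norm (f : C * C -> C) (z : C * C) : R :=
  opnorm22 (pd0 (pd0 f) z) (pd1 (pd0 f) z) (pd0 (pd1 f) z) (pd1 (pd1 f) z).

Definition M0j (R0 : R) (f : C * C -> C) : R :=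
  real (Lub_Rbar (fun r => exists z, inW R0 z /\ r = grad_norm_sum f z)).
Definition M1j (R0 : R) (f : C * C -> C) : R :=
  real (Lub_Rbar (fun r => exists z, inW R0 z /\ r = hess_norm f z)).
Definition M0 (R0 : R) (g0 g1 g2 : C * C -> C) : R :=
  sqrt (M0j R0 g0 ^ 2 + M0j R0 g1 ^ 2 + M0j R0 g2 ^ 2).
Definition M1 (R0 : R) (g0 g1 g2 : C * C -> C) : R :=
  sqrt (M1j R0 g0 ^ 2 + M1j R0 g1 ^ 2 + M1j R0 g2 ^ 2).

Definition bmax (C0 R0 : R) (g0 g1 g2 : C * C -> C) : R :=
  Rmin (C0 ^ 2 / (sqrt 2 * M0 R0 g0 g1 g2 * M1 R0 g0 g1 g2)) (R0 / 2).
Definition bstar (b C0 R0 : R) (g0 g1 g2 : C * C -> C) : R :=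
  (b + bmax C0 R0 g0 g1 g2) / 2.

Definition dist2piZ (t : R) : R :=
  real (Glb_Rbar (fun d => exists k : Z, d = Rabs (t - 2 * PI * IZR k))).
Definition zeta (t s : R) : R := sqrt (dist2piZ t ^ 2 + dist2piZ s ^ 2).

(** bilinear dot product (no conjugation) and cross product on C^3 *)
Definition cdot3 (a b : C * C * C) : C :=
  let '(a0, a1, a2) := a in let '(b0, b1, b2) := b in
  Cplus (Cplus (Cmult a0 b0) (Cmult a1 b1)) (Cmult a2 b2).
Definition ccross3 (a b : C * C * C) : C * C * C :=
  let '(a0, a1, a2) := a in let '(b0, b1, b2) := b in
  (Cminus (Cmult a1 b2) (Cmult a2 b1),
   Cminus (Cmult a2 b0) (Cmult a0 b2),
   Cminus (Cmult a0 b1) (Cmult a1 b0)).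
Definition csub3 (a b : C * C * C) : C * C * C :=
  let '(a0, a1, a2) := a in let '(b0, b1, b2) := b in
  (Cminus a0 b0, Cminus a1 b1, Cminus a2 b2).

Definition Gam (g0 g1 g2 : C * C -> C) (z : C * C) : C * C * C := (g0 z, g1 z, g2 z).
Definition dGam0 (g0 g1 g2 : C * C -> C) (z : C * C) : C * C * C :=
  (pd0 g0 z, pd0 g1 z, pd0 g2 z).
Definition dGam1 (g0 g1 g2 : C * C -> C) (z : C * C) : C * C * C :=
  (pd1 g0 z, pd1 g1 z, pd1 g2 z).

Definition rdist3 (gr0 gr1 gr2 : R -> R -> R) (t s t' s' : R) : R :=
  sqrt ((gr0 t s - gr0 t' s') ^ 2 + (gr1 t s - gr1 t' s') ^ 2 + (gr2 t s - gr2 t' s') ^ 2).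

Definition biperiodic (f : R -> R -> R) : Prop :=
  forall t s, f (t + 2 * PI) s = f t s /\ f t (s + 2 * PI) = f t s.

Definition inI (t : R) : Prop := 0 <= t < 2 * PI.

Definition ext_of (R0 : R) (gr : R -> R -> R) (g : C * C -> C) : Prop :=
  analytic_near (inWcl R0) g /\
  (forall t s, g (rpt t s) = RtoC (gr t s)) /\
  (forall z, inWcl R0 z ->
     g (cadd2 z (rpt (2 * PI) 0)) = g z /\ g (cadd2 z (rpt 0 (2 * PI))) = g z).

(* Write w = z + ϑ and N = ∂₀Γ(w) × ∂₁Γ(w).  By periodicity Γ(z) = Γ(w + d) for a real vector d
   with |dᵢ| ≤ ζ(ϑ), so the quantity to bound is h(1), where h(λ) = (Γ(w + λd) − Γ(w))·N.  With
   ρ = R0 − b^*, the map h is holomorphic on a disc of radius ρ/ζ(ϑ), h(0) = 0, and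
   h'(0) = (DΓ(w)d)·N = 0 because a triple product with a repeated direction vanishes.  Cauchy's
   estimate for the Taylor remainder then gives |h(1)| ≤ 16 sup|h| ζ(ϑ)²/ρ²; sup|h| and |N| are
   bounded through a uniform bound of Γ on the closed strip (compactness plus periodicity) and
   Cauchy's estimate for ∂ᵢΓ. *)

From Stdlib Require Import Reals Lra Lia ZArith ClassicalEpsilon Classical.
From Coquelicot Require Import Coquelicot.
Open Scope R_scope.

Lemma C_ext (x y : C) : fst x = fst y -> snd x = snd y -> x = y.
Proof. destruct x, y; simpl; intros; subst; reflexivity. Qed.

Ltac C_ring := apply C_ext; unfold Cminus, Cplus, Cmult, Copp, RtoC, Ci; simpl; ring.

(** * Complex-valued integrals over real intervals *)

Definition is_CInt (f : R -> C) a b (l : C) := @is_RInt C_R_NormedModule f a b l.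

Lemma is_CInt_ext f g a b l : (forall x, Rmin a b <= x <= Rmax a b -> f x = g x) -> is_CInt f a b l ->
  is_CInt g a b l.
Proof. intros H H'. apply (is_RInt_ext f); auto. intros; apply H; lra. Qed.

Lemma is_CInt_plus f g a b l1 l2 : is_CInt f a b l1 -> is_CInt g a b l2 ->
  is_CInt (fun t => (f t + g t)%C) a b (l1 + l2)%C.
Proof. intros H1 H2. exact (is_RInt_plus (V:=C_R_NormedModule) f g a b l1 l2 H1 H2). Qed.

Lemma is_CInt_opp f a b l : is_CInt f a b l -> is_CInt (fun t => (- f t)%C) a b (- l)%C.
Proof. intros H. exact (is_RInt_opp (V:=C_R_NormedModule) f a b l H). Qed.

Lemma is_CInt_minus f g a b l1 l2 : is_CInt f a b l1 -> is_CInt g a b l2 ->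
  is_CInt (fun t => (f t - g t)%C) a b (l1 - l2)%C.
Proof. intros H1 H2. apply is_CInt_plus; auto. apply is_CInt_opp; auto. Qed.

Lemma is_CInt_fst f a b l : is_CInt f a b l -> is_RInt (fun t => fst (f t)) a b (fst l).
Proof. intros H. exact (is_RInt_fct_extend_fst (U:=R_NormedModule) (V:=R_NormedModule) f a b l H). Qed.
Lemma is_CInt_snd f a b l : is_CInt f a b l -> is_RInt (fun t => snd (f t)) a b (snd l).
Proof. intros H. exact (is_RInt_fct_extend_snd (U:=R_NormedModule) (V:=R_NormedModule) f a b l H). Qed.
Lemma is_CInt_pair f a b l : is_RInt (fun t => fst (f t)) a b (fst l) ->
  is_RInt (fun t => snd (f t)) a b (snd l) -> is_CInt f a b l.
Proof.
  intros H1 H2. destruct l as [l1 l2].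
  exact (is_RInt_fct_extend_pair (U:=R_NormedModule) (V:=R_NormedModule) f a b l1 l2 H1 H2).
Qed.

Lemma is_CInt_mult_l f a b c l : is_CInt f a b l -> is_CInt (fun t => (c * f t)%C) a b (c * l)%C.
Proof.
  intros H. apply is_CInt_pair.
  - simpl. apply (is_RInt_ext (fun t => fst c * fst (f t) - snd c * snd (f t))).
    intros; reflexivity.
    apply (is_RInt_minus (V:=R_NormedModule)).
    apply (is_RInt_scal (V:=R_NormedModule)). apply is_CInt_fst; auto.
    apply (is_RInt_scal (V:=R_NormedModule)). apply is_CInt_snd; auto.
  - simpl. apply (is_RInt_ext (fun t => fst c * snd (f t) + snd c * fst (f t))).
    intros; reflexivity.
    apply (is_RInt_plus (V:=R_NormedModule)).
    apply (is_RInt_scal (V:=R_NormedModule)). apply is_CInt_snd; auto.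
    apply (is_RInt_scal (V:=R_NormedModule)). apply is_CInt_fst; auto.
Qed.

Lemma is_CInt_const a b (c : C) : is_CInt (fun _ => c) a b (RtoC (b - a) * c)%C.
Proof. rewrite <- scal_R_Cmult. exact (is_RInt_const (V:=C_R_NormedModule) a b c). Qed.

Lemma is_CInt_unique f a b l1 l2 : is_CInt f a b l1 -> is_CInt f a b l2 -> l1 = l2.
Proof.
  intros H1 H2.
  rewrite <- (is_RInt_unique (V:=C_R_CompleteNormedModule) f a b l1 H1).
  rewrite <- (is_RInt_unique (V:=C_R_CompleteNormedModule) f a b l2 H2). reflexivity.
Qed.

Lemma norm_C_R (x : C) : @norm _ C_R_NormedModule x = Cmod x.
Proof.
  destruct x as [x y]. unfold Cmod. simpl fst; simpl snd.
  change (sqrt (@norm _ R_NormedModule x ^ 2 + @norm _ R_NormedModule y ^ 2) = sqrt (x^2+y^2)).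
  unfold norm; simpl; unfold abs; simpl. rewrite !Rmult_1_r, <- !Rabs_mult, !Rabs_right; try reflexivity; apply Rle_ge; apply Rle_0_sqr.
Qed.

Lemma is_CInt_norm_le f a b l B : a <= b -> (forall t, a <= t <= b -> Cmod (f t) <= B) ->
  is_CInt f a b l -> Cmod l <= B * (b - a).
Proof.
  intros Hab HB H. rewrite <- norm_C_R, Rmult_comm.
  apply (norm_RInt_le_const f a b l B Hab); auto.
  intros t Ht. rewrite norm_C_R. auto.
Qed.

Lemma is_CInt_Chasles f a b c l1 l2 : is_CInt f a b l1 -> is_CInt f b c l2 -> is_CInt f a c (l1 + l2)%C.
Proof. intros H1 H2. exact (is_RInt_Chasles (V:=C_R_NormedModule) f a b c l1 l2 H1 H2). Qed.

Lemma is_CInt_swap f a b l : is_CInt f b a l -> is_CInt f a b (- l)%C.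
Proof. intros H. exact (is_RInt_swap (V:=C_R_NormedModule) f a b l H). Qed.

Lemma is_CInt_comp_lin f u v a b l : is_CInt f (u * a + v) (u * b + v) l ->
  is_CInt (fun y => (RtoC u * f (u * y + v)%R)%C) a b l.
Proof.
  intros H. apply is_CInt_ext with (f := fun y => @scal _ C_R_NormedModule u (f (u * y + v))).
  intros; rewrite scal_R_Cmult; reflexivity.
  exact (is_RInt_comp_lin (V:=C_R_NormedModule) f u v a b l H).
Qed.

Definition continuous_RC (f : R -> C) (t : R) := @continuous R_UniformSpace C_UniformSpace f t.

Lemma is_CInt_continuous f a b : (forall t, Rmin a b <= t <= Rmax a b -> continuous_RC f t) ->
  is_CInt f a b (RInt (V:=C_R_CompleteNormedModule) f a b).
Proof.
  intros H. apply (RInt_correct (V:=C_R_CompleteNormedModule)).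
  apply (ex_RInt_continuous (V:=C_R_CompleteNormedModule)). exact H.
Qed.

Lemma Cmod_fst_le (x : C) : Rabs (fst x) <= Cmod x.
Proof. exact (re_le_Cmod x). Qed.
Lemma Cmod_snd_le (x : C) : Rabs (snd x) <= Cmod x.
Proof. pose proof (Rmax_Cmod x). pose proof (Rmax_r (Rabs (fst x)) (Rabs (snd x))). lra. Qed.

Lemma Cmod_le_abs_sum (x : C) : Cmod x <= Rabs (fst x) + Rabs (snd x).
Proof.
  destruct x as [a b]. unfold Cmod; simpl.
  apply Rsqr_incr_0_var. 2: pose proof (Rabs_pos a); pose proof (Rabs_pos b); lra.
  rewrite Rsqr_sqrt. 2: nra. unfold Rsqr.
  assert (a * (a * 1) + b * (b * 1) = Rabs a * Rabs a + Rabs b * Rabs b) as ->.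
  { rewrite <- !Rabs_mult. rewrite !Rabs_right; try (apply Rle_ge, Rle_0_sqr). ring. }
  pose proof (Rabs_pos a); pose proof (Rabs_pos b). nra.
Qed.

Lemma locally_C_intro (z : C) (Q : C -> Prop) :
  (exists d, 0 < d /\ forall w, Cmod (w - z) < d -> Q w) -> @locally C_UniformSpace z Q.
Proof.
  intros [d [Hd H]]. exists (mkposreal (d/2) ltac:(lra)). intros w [H1 H2].
  apply H. change (Rabs (fst w + - fst z) < d/2) in H1. change (Rabs (snd w + - snd z) < d/2) in H2.
  pose proof (Cmod_le_abs_sum (w - z)%C). simpl in H0. lra.
Qed.

Lemma locally_C_elim (z : C) (Q : C -> Prop) :
  @locally C_UniformSpace z Q -> exists d, 0 < d /\ forall w, Cmod (w - z) < d -> Q w.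
Proof.
  intros [d H]. exists d. split. apply cond_pos. intros w Hw. apply H. split.
  - change (Rabs (fst w + - fst z) < d).
    pose proof (Cmod_fst_le (w - z)%C). simpl in H0. lra.
  - change (Rabs (snd w + - snd z) < d).
    pose proof (Cmod_snd_le (w - z)%C). simpl in H0. lra.
Qed.

Lemma locally_CAbs_intro (z : C) (Q : C -> Prop) :
  (exists d, 0 < d /\ forall w, Cmod (w - z) < d -> Q w) -> @locally (AbsRing_UniformSpace C_AbsRing) z Q.
Proof. intros [d [Hd H]]. exists (mkposreal d Hd). intros w Hw. apply H. exact Hw. Qed.

Lemma locally_CAbs_elim (z : C) (Q : C -> Prop) :
  @locally (AbsRing_UniformSpace C_AbsRing) z Q -> exists d, 0 < d /\ forall w, Cmod (w - z) < d -> Q w.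
Proof. intros [d H]. exists d. split. apply cond_pos. intros w Hw. apply H. exact Hw. Qed.

(** * Complex derivatives and continuity *)

Definition is_Cderive (f : C -> C) (z l : C) := @is_derive C_AbsRing C_NormedModule f z l.

Lemma is_Cderive_approx f z l : is_Cderive f z l -> forall eps, 0 < eps -> exists d, 0 < d /\
  forall w, Cmod (w - z) < d -> Cmod (f w - f z - l * (w - z)) <= eps * Cmod (w - z).
Proof.
  intros [_ H] eps He.
  assert (Hl : is_filter_lim (locally (T:=AbsRing_UniformSpace C_AbsRing) z) z) by (intros Q HQ; exact HQ).
  specialize (H z Hl (mkposreal eps He)).
  apply locally_CAbs_elim in H. destruct H as [d [Hd H]]. exists d; split; auto.
  intros w Hw. specialize (H w Hw). simpl in H.
  replace (f w - f z - l * (w - z))%C with (minus (minus (f w) (f z)) (scal (minus w z) l)).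
  exact H. unfold minus, plus, opp, scal; simpl. unfold mult; simpl. C_ring.
Qed.

Lemma is_Cderive_of_approx f z l : (forall eps, 0 < eps -> exists d, 0 < d /\
  forall w, Cmod (w - z) < d -> Cmod (f w - f z - l * (w - z)) <= eps * Cmod (w - z)) -> is_Cderive f z l.
Proof.
  intros H. split.
  - apply is_linear_scal_l.
  - intros x Hx. 
    assert (x = z). { symmetry. apply (is_filter_lim_locally_unique (K:=C_AbsRing) (V:=AbsRing_NormedModule C_AbsRing)); exact Hx. }
    subst x. intros [eps He]. apply locally_CAbs_intro. destruct (H eps He) as [d [Hd H']].
    exists d; split; auto. intros w Hw. specialize (H' w Hw).
    assert (E : (f w - f z - l * (w - z))%C = minus (minus (f w) (f z)) (scal (minus w z) l)).
    { unfold minus, plus, opp, scal; simpl. unfold mult; simpl. C_ring. }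
    rewrite E in H'. exact H'.
Qed.

Lemma is_Cderive_unique f z l1 l2 : is_Cderive f z l1 -> is_Cderive f z l2 -> l1 = l2.
Proof. intros H1 H2. rewrite <- (is_C_derive_unique f z l1 H1). apply is_C_derive_unique; auto. Qed.

Definition C_cont_at (f : C -> C) z := forall eps, 0 < eps -> exists d, 0 < d /\
  forall w, Cmod (w - z) < d -> Cmod (f w - f z) < eps.

Lemma is_Cderive_cont_at f z l : is_Cderive f z l -> C_cont_at f z.
Proof.
  intros H eps He. destruct (is_Cderive_approx f z l H 1 ltac:(lra)) as [d [Hd H']].
  exists (Rmin d (eps / (Cmod l + 2))). split.
  apply Rmin_glb_lt; auto. apply Rdiv_lt_0_compat; auto. pose proof (Cmod_ge_0 l); lra.
  intros w Hw. specialize (H' w ltac:(pose proof (Rmin_l d (eps / (Cmod l + 2))); lra)).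
  replace (f w - f z)%C with ((f w - f z - l * (w - z)) + l * (w - z))%C by C_ring.
  eapply Rle_lt_trans. apply Cmod_triangle. rewrite Cmod_mult.
  pose proof (Rmin_r d (eps / (Cmod l + 2))). pose proof (Cmod_ge_0 l). pose proof (Cmod_ge_0 (w - z)%C).
  assert (Cmod (w - z) * (Cmod l + 2) < eps).
  { apply Rlt_le_trans with (eps / (Cmod l + 2) * (Cmod l + 2)). apply Rmult_lt_compat_r; lra. right; field; lra. }
  nra.
Qed.

Lemma C_cont_at_mult_r (f : C -> C) c z : C_cont_at f z -> C_cont_at (fun w => (f w * c)%C) z.
Proof.
  intros H eps He. destruct (H (eps / (Cmod c + 1))) as [d [Hd H']].
  apply Rdiv_lt_0_compat; auto. pose proof (Cmod_ge_0 c); lra.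
  exists d; split; auto. intros w Hw. specialize (H' w Hw).
  replace (f w * c - f z * c)%C with ((f w - f z) * c)%C by C_ring. rewrite Cmod_mult.
  pose proof (Cmod_ge_0 c). pose proof (Cmod_ge_0 (f w - f z)%C).
  apply Rle_lt_trans with (Cmod (f w - f z) * (Cmod c + 1)). nra.
  apply Rlt_le_trans with (eps / (Cmod c + 1) * (Cmod c + 1)). apply Rmult_lt_compat_r; lra.
  right; field; lra.
Qed.

Lemma C_cont_at_minus f g z : C_cont_at f z -> C_cont_at g z -> C_cont_at (fun x => f x - g x)%C z.
Proof.
  intros H1 H2 eps He. destruct (H1 (eps/2) ltac:(lra)) as [d1' [Hd1 K1]].
  destruct (H2 (eps/2) ltac:(lra)) as [d2 [Hd2 K2]]. exists (Rmin d1' d2). split. apply Rmin_glb_lt; auto.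
  intros w Hw. pose proof (Rmin_l d1' d2). pose proof (Rmin_r d1' d2).
  specialize (K1 w ltac:(lra)). specialize (K2 w ltac:(lra)).
  replace (f w - g w - (f z - g z))%C with ((f w - f z) + - (g w - g z))%C by C_ring.
  eapply Rle_lt_trans. apply Cmod_triangle. rewrite Cmod_opp. lra.
Qed.

Lemma is_Cderive_affine (A B0 z : C) : is_Cderive (fun x => A + B0 * x)%C z B0.
Proof.
  apply is_Cderive_of_approx. intros eps He. exists 1. split. lra. intros w _.
  replace (A + B0 * w - (A + B0 * z) - B0 * (w - z))%C with (RtoC 0) by C_ring. rewrite Cmod_0.
  pose proof (Cmod_ge_0 (w - z)%C). nra.
Qed.

Lemma is_Cderive_const (c z : C) : is_Cderive (fun _ => c) z (RtoC 0).
Proof. exact (is_derive_const c z). Qed.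

Lemma is_Cderive_plus f g z lf lg : is_Cderive f z lf -> is_Cderive g z lg ->
  is_Cderive (fun w => f w + g w)%C z (lf + lg)%C.
Proof. exact (is_derive_plus f g z lf lg). Qed.

Lemma is_Cderive_mult f g z df dg : is_Cderive f z df -> is_Cderive g z dg ->
  is_Cderive (fun w => f w * g w)%C z (df * g z + f z * dg)%C.
Proof.
  intros Hf Hg. apply is_Cderive_of_approx. intros eps He.
  set (S := Cmod (g z) + 1 + Cmod df + Cmod (f z)).
  assert (HS : 1 <= S) by (unfold S; pose proof (Cmod_ge_0 (g z)); pose proof (Cmod_ge_0 df); pose proof (Cmod_ge_0 (f z)); lra).
  set (e := Rmin 1 (eps / S)).
  assert (He0 : 0 < e) by (unfold e; apply Rmin_glb_lt; [lra|apply Rdiv_lt_0_compat; lra]).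
  assert (He1 : e <= 1) by apply Rmin_l. assert (He2 : e <= eps / S) by apply Rmin_r.
  destruct (is_Cderive_approx f z df Hf e He0) as [d1 [Hd1 K1]]. destruct (is_Cderive_approx g z dg Hg e He0) as [d2 [Hd2 K2]].
  destruct (is_Cderive_cont_at g z dg Hg e He0) as [d3 [Hd3 K3]].
  exists (Rmin d1 (Rmin d2 d3)). split. repeat apply Rmin_glb_lt; auto. intros w Hw.
  assert (W1 : Cmod (w - z) < d1) by (eapply Rlt_le_trans; [exact Hw|apply Rmin_l]).
  assert (W2 : Cmod (w - z) < d2) by (eapply Rlt_le_trans; [exact Hw|eapply Rle_trans; [apply Rmin_r|apply Rmin_l]]).
  assert (W3 : Cmod (w - z) < d3) by (eapply Rlt_le_trans; [exact Hw|eapply Rle_trans; [apply Rmin_r|apply Rmin_r]]).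
  specialize (K1 w W1). specialize (K2 w W2). specialize (K3 w W3).
  replace (f w * g w - f z * g z - (df * g z + f z * dg) * (w - z))%C with
    ((f w - f z - df * (w - z)) * g w + df * (w - z) * (g w - g z) + f z * (g w - g z - dg * (w - z)))%C by C_ring.
  assert (Gw : Cmod (g w) <= Cmod (g z) + 1).
  { replace (g w) with ((g w - g z) + g z)%C by C_ring. eapply Rle_trans. apply Cmod_triangle. lra. }
  eapply Rle_trans. apply Cmod_triangle. eapply Rle_trans. apply Rplus_le_compat_r. apply Cmod_triangle.
  rewrite !Cmod_mult.
  pose proof (Cmod_ge_0 (w - z)%C). pose proof (Cmod_ge_0 df). pose proof (Cmod_ge_0 (f z)).
  pose proof (Cmod_ge_0 (g w)). pose proof (Cmod_ge_0 (f w - f z - df * (w - z))%C).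
  assert (A1 : Cmod (f w - f z - df * (w - z)) * Cmod (g w) <= e * Cmod (w - z) * (Cmod (g z) + 1)) by nra.
  assert (A2 : Cmod df * Cmod (w - z) * Cmod (g w - g z) <= Cmod df * Cmod (w - z) * e) by (apply Rmult_le_compat_l; nra).
  assert (A3 : Cmod (f z) * Cmod (g w - g z - dg * (w - z)) <= Cmod (f z) * (e * Cmod (w - z))) by (apply Rmult_le_compat_l; nra).
  assert (e * S <= eps) by (apply Rle_trans with (eps / S * S); [apply Rmult_le_compat_r; lra| right; field; lra]).
  unfold S in *. nra.
Qed.

Lemma is_Cderive_mult_const f z l c : is_Cderive f z l -> is_Cderive (fun w => f w * c)%C z (l * c)%C.
Proof.
  intros H. pose proof (is_Cderive_mult f (fun _ => c) z l (RtoC 0) H (is_Cderive_const c z)) as K.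
  replace (l * c)%C with (l * c + f z * RtoC 0)%C by C_ring. exact K.
Qed.

Lemma is_Cderive_minus_const f z l c : is_Cderive f z l -> is_Cderive (fun w => f w - c)%C z l.
Proof.
  intros H. apply is_Cderive_of_approx. intros eps He. destruct (is_Cderive_approx f z l H eps He) as [d [Hd K]].
  exists d; split; auto. intros w Hw. replace (f w - c - (f z - c) - l * (w - z))%C with (f w - f z - l * (w - z))%C by C_ring. auto.
Qed.

Lemma is_Cderive_ext_loc g h z l d : 0 < d -> (forall w, Cmod (w - z) < d -> g w = h w) ->
  is_Cderive g z l -> is_Cderive h z l.
Proof. intros Hd E. apply is_derive_ext_loc. exists (mkposreal d Hd). exact E. Qed.

Lemma is_Cderive_inv_shift (lam z : C) : z <> lam ->
  is_Cderive (fun w => / (w - lam))%C z (- / ((z - lam) * (z - lam)))%C.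
Proof.
  intros Hz. assert (Hz' : (z - lam)%C <> RtoC 0) by (intros E; apply Hz; transitivity ((z - lam) + lam)%C; [C_ring|rewrite E; C_ring]).
  set (m := Cmod (z - lam)). assert (Hm : 0 < m) by (apply Cmod_gt_0; auto).
  apply is_Cderive_of_approx. intros eps He. exists (Rmin (m / 2) (eps * m * m * m / 2)). split.
  apply Rmin_glb_lt; [lra|]. apply Rdiv_lt_0_compat; [|lra]. repeat apply Rmult_lt_0_compat; auto.
  intros w Hw. pose proof (Rmin_l (m / 2) (eps * m * m * m / 2)). pose proof (Rmin_r (m / 2) (eps * m * m * m / 2)).
  assert (Hwl : m / 2 <= Cmod (w - lam)).
  { pose proof (Cmod_triangle (z - w) (w - lam)) as T.
    replace ((z - w) + (w - lam))%C with (z - lam)%C in T by C_ring. fold m in T.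
    replace (z - w)%C with (- (w - z))%C in T by C_ring. rewrite Cmod_opp in T. lra. }
  assert (Hw' : (w - lam)%C <> RtoC 0) by (intros E; rewrite E, Cmod_0 in Hwl; lra).
  replace (/ (w - lam) - / (z - lam) - - / ((z - lam) * (z - lam)) * (w - z))%C with
    ((w - z) * (w - z) / ((w - lam) * ((z - lam) * (z - lam))))%C by (field; auto).
  unfold Cdiv. rewrite !Cmod_mult. rewrite Cmod_inv. 2: repeat apply Cmult_neq_0; auto.
  rewrite !Cmod_mult. fold m.
  pose proof (Cmod_ge_0 (w - z)%C).
  assert (0 < Cmod (w - lam)) by lra.
  apply Rle_trans with (Cmod (w - z) * Cmod (w - z) * / (m / 2 * (m * m))).
  apply Rmult_le_compat_l. nra. apply Rinv_le_contravar. repeat apply Rmult_lt_0_compat; lra.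
  apply Rmult_le_compat_r. nra. auto.
  replace (Cmod (w - z) * Cmod (w - z) * / (m / 2 * (m * m))) with (Cmod (w - z) * (2 * Cmod (w - z) / (m * m * m))) by (field; lra).
  rewrite Rmult_comm. apply Rmult_le_compat_r; auto.
  apply Rmult_le_reg_r with (m * m * m). repeat apply Rmult_lt_0_compat; auto.
  unfold Rdiv. rewrite Rmult_assoc, Rinv_l. 2: apply Rgt_not_eq; repeat apply Rmult_lt_0_compat; auto. lra.
Qed.

Definition RC_cont_at (g : R -> C) t := forall eps, 0 < eps -> exists d, 0 < d /\
  forall s, Rabs (s - t) < d -> Cmod (g s - g t) < eps.

Lemma RC_cont_at_continuous (g : R -> C) t : RC_cont_at g t -> continuous_RC g t.
Proof.
  intros H Q HQ. apply locally_C_elim in HQ. destruct HQ as [e [He HQ]].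
  destruct (H e He) as [d [Hd H']]. exists (mkposreal d Hd). intros s Hs. apply HQ. apply H'. exact Hs.
Qed.

Lemma continuous_RC_cont_at (g : R -> C) t : continuous_RC g t -> RC_cont_at g t.
Proof.
  intros H eps He.
  assert (HP : @locally C_UniformSpace (g t) (fun y => Cmod (y - g t) < eps)).
  { apply locally_C_intro. exists eps; split; auto. }
  specialize (H _ HP). destruct H as [d Hd]. exists d. split. apply cond_pos. intros s Hs. apply Hd. exact Hs.
Qed.

Lemma RC_cont_at_comp (g : R -> C) (f : C -> C) t : RC_cont_at g t -> C_cont_at f (g t) ->
  RC_cont_at (fun s => f (g s)) t.
Proof.
  intros H1 H2 eps He. destruct (H2 eps He) as [d1 [Hd1 H2']]. destruct (H1 d1 Hd1) as [d [Hd H1']].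
  exists d; split; auto.
Qed.

Lemma RC_cont_at_affine (u d : C) t : RC_cont_at (fun s => (u + RtoC s * d)%C) t.
Proof.
  intros eps He. exists (eps / (Cmod d + 1)). split.
  apply Rdiv_lt_0_compat; auto. pose proof (Cmod_ge_0 d); lra.
  intros s Hs. replace (u + RtoC s * d - (u + RtoC t * d))%C with (RtoC (s - t) * d)%C by C_ring.
  rewrite Cmod_mult, Cmod_R. pose proof (Cmod_ge_0 d). pose proof (Rabs_pos (s - t)).
  apply Rle_lt_trans with (Rabs (s - t) * (Cmod d + 1)). nra.
  apply Rlt_le_trans with (eps / (Cmod d + 1) * (Cmod d + 1)). apply Rmult_lt_compat_r; lra.
  right; field; lra.
Qed.

Lemma RC_cont_at_ext g h t : (forall s, g s = h s) -> RC_cont_at g t -> RC_cont_at h t.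
Proof. intros E H eps He. destruct (H eps He) as [d [Hd K]]. exists d; split; auto. intros s Hs. rewrite <- !E. auto. Qed.

Lemma RC_cont_at_const (c : C) t : RC_cont_at (fun _ => c) t.
Proof. intros eps He. exists 1. split. lra. intros. replace (c - c)%C with (RtoC 0) by C_ring. rewrite Cmod_0. lra. Qed.

Lemma RC_cont_at_mult (g h : R -> C) t : RC_cont_at g t -> RC_cont_at h t -> RC_cont_at (fun s => (g s * h s)%C) t.
Proof.
  intros Hg Hh eps He.
  set (A := Cmod (g t) + 1). set (B := Cmod (h t) + 1).
  assert (HA : 1 <= A) by (unfold A; pose proof (Cmod_ge_0 (g t)); lra).
  assert (HB : 1 <= B) by (unfold B; pose proof (Cmod_ge_0 (h t)); lra).
  set (e := Rmin 1 (eps / (2 * (A + B)))).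
  assert (He0 : 0 < e) by (unfold e; apply Rmin_glb_lt; [lra|apply Rdiv_lt_0_compat; lra]).
  assert (He1 : e <= 1) by apply Rmin_l. assert (He2 : e <= eps / (2 * (A + B))) by apply Rmin_r.
  destruct (Hg e He0) as [d1 [Hd1 K1]]. destruct (Hh e He0) as [d2 [Hd2 K2]].
  exists (Rmin d1 d2). split. apply Rmin_glb_lt; auto. intros s Hs.
  pose proof (Rmin_l d1 d2). pose proof (Rmin_r d1 d2).
  specialize (K1 s ltac:(lra)). specialize (K2 s ltac:(lra)).
  replace (g s * h s - g t * h t)%C with ((g s - g t) * h s + g t * (h s - h t))%C by C_ring.
  eapply Rle_lt_trans. apply Cmod_triangle. rewrite !Cmod_mult.
  assert (Cmod (h s) <= B).
  { replace (h s) with ((h s - h t) + h t)%C by C_ring. eapply Rle_trans. apply Cmod_triangle. unfold B. lra. }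
  pose proof (Cmod_ge_0 (g s - g t)%C). pose proof (Cmod_ge_0 (h s - h t)%C). pose proof (Cmod_ge_0 (g t)).
  apply Rle_lt_trans with (e * B + A * e). unfold A in *. nra.
  assert (e * (A + B) <= eps / 2). { apply Rle_trans with (eps / (2 * (A + B)) * (A + B)). apply Rmult_le_compat_r; lra. right; field; lra. }
  nra.
Qed.

Lemma RC_cont_at_inv h t : RC_cont_at h t -> h t <> RtoC 0 -> RC_cont_at (fun s => / h s)%C t.
Proof.
  intros H Hn eps He. set (m := Cmod (h t)). assert (Hm : 0 < m) by (apply Cmod_gt_0; auto).
  destruct (H (Rmin (m / 2) (eps * m * m / 2))) as [d [Hd K]].
  apply Rmin_glb_lt; [lra|]. apply Rdiv_lt_0_compat; [|lra]. repeat apply Rmult_lt_0_compat; auto.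
  exists d; split; auto. intros s Hs. specialize (K s Hs).
  pose proof (Rmin_l (m / 2) (eps * m * m / 2)). pose proof (Rmin_r (m / 2) (eps * m * m / 2)).
  assert (Hs2 : m / 2 <= Cmod (h s)).
  { pose proof (Cmod_triangle (h t - h s) (h s)) as T. replace (h t - h s + h s)%C with (h t) in T by C_ring.
    replace (h t - h s)%C with (- (h s - h t))%C in T by C_ring. rewrite Cmod_opp in T. fold m in T. lra. }
  assert (Hn' : h s <> RtoC 0) by (intros E; rewrite E, Cmod_0 in Hs2; lra).
  replace (/ h s - / h t)%C with ((h t - h s) / (h s * h t))%C by (field; auto).
  unfold Cdiv. rewrite Cmod_mult, Cmod_inv, Cmod_mult by (apply Cmult_neq_0; auto). fold m.
  replace (h t - h s)%C with (- (h s - h t))%C by C_ring. rewrite Cmod_opp.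
  apply Rle_lt_trans with (Cmod (h s - h t) * / (m / 2 * m)).
  apply Rmult_le_compat_l. apply Cmod_ge_0. apply Rinv_le_contravar. nra. apply Rmult_le_compat_r; lra.
  apply Rmult_lt_reg_r with (m / 2 * m). nra. rewrite Rmult_assoc, Rinv_l by nra. nra.
Qed.

Definition is_RCderive (g : R -> C) (x : R) (l : C) := @is_derive R_AbsRing C_R_NormedModule g x l.

Lemma is_RCderive_cont_at g x l : is_RCderive g x l -> RC_cont_at g x.
Proof. intros H. apply continuous_RC_cont_at. exact (ex_derive_continuous (K:=R_AbsRing) (V:=C_R_NormedModule) g x (ex_intro _ l H)). Qed.

Lemma is_RCderive_comp (F : C -> C) (g : R -> C) x l dg : is_Cderive F (g x) l -> is_RCderive g x dg ->
  is_RCderive (fun t => F (g t)) x (l * dg)%C.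
Proof.
  intros HF Hg.
  assert (Hder : @filterdiff R_AbsRing C_R_NormedModule C_R_NormedModule F (locally (g x)) (fun h => (l * h)%C)).
  { split.
    - apply Build_is_linear.
      + intros y z. change (l * (y + z) = (l * y) + (l * z))%C. C_ring.
      + intros k y. rewrite !scal_R_Cmult. C_ring.
      + exists (Cmod l + 1). split. pose proof (Cmod_ge_0 l); lra. intros y. rewrite !norm_C_R, Cmod_mult.
        pose proof (Cmod_ge_0 y). nra.
    - intros y Hy. assert (E : g x = y) by exact (is_filter_lim_locally_unique (K:=R_AbsRing) (V:=C_R_NormedModule) _ _ Hy).
      subst y. intros [eps He]. apply locally_C_intro. destruct (is_Cderive_approx F (g x) l HF eps He) as [d [Hd K]].
      exists d; split; auto. intros w Hw. simpl. rewrite !norm_C_R.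
      replace (minus (minus (F w) (F (g x))) (l * minus w (g x)))%C with (F w - F (g x) - l * (w - g x))%C.
      replace (minus w (g x)) with (w - g x)%C. apply K; auto.
      reflexivity. reflexivity. }
  pose proof (filterdiff_comp' g F x _ _ Hg Hder) as K.
  unfold is_RCderive, is_derive. eapply filterdiff_ext_lin. exact K.
  intros y. simpl. rewrite !scal_R_Cmult. C_ring.
Qed.

Lemma is_RCderive_mult_const g x l K : is_RCderive g x l -> is_RCderive (fun t => g t * K)%C x (l * K)%C.
Proof.
  intros H. pose proof (is_RCderive_comp (fun w => RtoC 0 + K * w)%C g x K l (is_Cderive_affine _ _ _) H) as E.
  eapply is_derive_ext. 2: { replace (l * K)%C with (K * l)%C by C_ring. exact E. } intros t. simpl. C_ring.
Qed.

(** * Integrals along segments *)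

Definition seg_integrand (psi : C -> C) (u v : C) (t : R) : C := (psi (u + RtoC t * (v - u)) * (v - u))%C.
(* [RInt] is total; [seg_int_correct] shows the value is the integral when [psi] is continuous on [u, v]. *)
Definition seg_int (psi : C -> C) (u v : C) : C := RInt (V:=C_R_CompleteNormedModule) (seg_integrand psi u v) 0 1.
Definition line_integrand (psi : C -> C) (p d : C) (x : R) : C := (psi (p + RtoC x * d) * d)%C.

Lemma RC_cont_at_line_integrand psi p d x : C_cont_at psi (p + RtoC x * d)%C ->
  RC_cont_at (line_integrand psi p d) x.
Proof.
  intros H. unfold line_integrand. apply (RC_cont_at_comp (fun s => (p + RtoC s * d)%C) (fun w => (psi w * d)%C)).
  apply RC_cont_at_affine. apply C_cont_at_mult_r. exact H.
Qed.

Lemma is_CInt_line_integrand psi p d a b : (forall x, Rmin a b <= x <= Rmax a b ->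
  C_cont_at psi (p + RtoC x * d)%C) ->
  is_CInt (line_integrand psi p d) a b (RInt (V:=C_R_CompleteNormedModule) (line_integrand psi p d) a b).
Proof. intros H. apply is_CInt_continuous. intros t Ht. apply RC_cont_at_continuous. apply RC_cont_at_line_integrand. auto. Qed.

Lemma seg_int_on_line psi p d u v a b : u = (p + RtoC a * d)%C -> v = (p + RtoC b * d)%C ->
  (forall x, Rmin a b <= x <= Rmax a b -> C_cont_at psi (p + RtoC x * d)%C) ->
  is_CInt (seg_integrand psi u v) 0 1 (RInt (V:=C_R_CompleteNormedModule) (line_integrand psi p d) a b) /\
  seg_int psi u v = RInt (V:=C_R_CompleteNormedModule) (line_integrand psi p d) a b.
Proof.
  intros -> -> H.
  assert (K : is_CInt (seg_integrand psi (p + RtoC a * d) (p + RtoC b * d)) 0 1 (RInt (V:=C_R_CompleteNormedModule) (line_integrand psi p d) a b)).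
  { pose proof (is_CInt_line_integrand psi p d a b H) as K.
    assert (K' : is_CInt (line_integrand psi p d) ((b - a) * 0 + a) ((b - a) * 1 + a) (RInt (V:=C_R_CompleteNormedModule) (line_integrand psi p d) a b)).
    { replace ((b - a) * 0 + a) with a by ring. replace ((b - a) * 1 + a) with b by ring. exact K. }
    pose proof (is_CInt_comp_lin _ _ _ _ _ _ K') as K2.
    eapply is_CInt_ext. 2: exact K2. intros y _. unfold line_integrand, seg_integrand.
    assert (E : (p + RtoC a * d + RtoC y * (p + RtoC b * d - (p + RtoC a * d)))%C = (p + RtoC ((b - a) * y + a) * d)%C) by C_ring.
    rewrite E. C_ring. }
  split; auto. unfold seg_int. apply (is_RInt_unique (V:=C_R_CompleteNormedModule)). exact K.
Qed.

Definition seg_cont psi u v := forall t, 0 <= t <= 1 -> C_cont_at psi (u + RtoC t * (v - u))%C.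

Lemma seg_int_correct psi u v : seg_cont psi u v -> is_CInt (seg_integrand psi u v) 0 1 (seg_int psi u v).
Proof.
  intros H. destruct (seg_int_on_line psi u (v - u) u v 0 1) as [K1 K2].
  C_ring. C_ring. intros x Hx. apply H. rewrite Rmin_left, Rmax_right in Hx; lra.
  rewrite K2. exact K1.
Qed.

Lemma seg_int_rev psi u v : seg_cont psi u v -> seg_int psi v u = (- seg_int psi u v)%C.
Proof.
  intros H.
  assert (Hc : forall x, Rmin 0 1 <= x <= Rmax 0 1 -> C_cont_at psi (u + RtoC x * (v - u))%C).
  { intros x Hx. apply H. rewrite Rmin_left, Rmax_right in Hx; lra. }
  assert (Hc' : forall x, Rmin 1 0 <= x <= Rmax 1 0 -> C_cont_at psi (u + RtoC x * (v - u))%C).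
  { intros x Hx. apply H. rewrite Rmin_right, Rmax_left in Hx; lra. }
  destruct (seg_int_on_line psi u (v - u) u v 0 1) as [_ K2]; [C_ring|C_ring|auto|].
  destruct (seg_int_on_line psi u (v - u) v u 1 0) as [_ K3]; [C_ring|C_ring|auto|].
  rewrite K2, K3. pose proof (is_CInt_line_integrand _ _ _ _ _ Hc) as I1. pose proof (is_CInt_line_integrand _ _ _ _ _ Hc') as I2.
  apply is_CInt_swap in I1. eapply is_CInt_unique; eauto.
Qed.

Lemma seg_int_collinear psi p d u v w a b c :
  u = (p + RtoC a * d)%C -> v = (p + RtoC b * d)%C -> w = (p + RtoC c * d)%C ->
  (forall x, Rmin a (Rmin b c) <= x <= Rmax a (Rmax b c) -> C_cont_at psi (p + RtoC x * d)%C) ->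
  (seg_int psi u v + seg_int psi v w + seg_int psi w u = 0)%C.
Proof.
  intros Hu Hv Hw H.
  assert (H1 : forall x y, (x = a \/ x = b \/ x = c) -> (y = a \/ y = b \/ y = c) ->
     forall z, Rmin x y <= z <= Rmax x y -> C_cont_at psi (p + RtoC z * d)%C).
  { intros x y Hx Hy z Hz. apply H.
    assert (Rmin a (Rmin b c) <= Rmin x y /\ Rmax x y <= Rmax a (Rmax b c)).
    { destruct Hx as [ Hx | [ Hx | Hx ] ]; destruct Hy as [ Hy | [ Hy | Hy ] ]; subst x y;
      unfold Rmin, Rmax; repeat destruct Rle_dec; lra. }
    lra. }
  destruct (seg_int_on_line psi p d u v a b Hu Hv) as [_ E1]. { apply H1; auto. }
  destruct (seg_int_on_line psi p d v w b c Hv Hw) as [_ E2]. { apply H1; auto. }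
  destruct (seg_int_on_line psi p d w u c a Hw Hu) as [_ E3]. { apply H1; auto. }
  rewrite E1, E2, E3.
  pose proof (is_CInt_line_integrand psi p d a b (H1 a b ltac:(auto) ltac:(auto))) as I1.
  pose proof (is_CInt_line_integrand psi p d b c (H1 b c ltac:(auto) ltac:(auto))) as I2.
  pose proof (is_CInt_line_integrand psi p d c a (H1 c a ltac:(auto) ltac:(auto))) as I3.
  pose proof (is_CInt_Chasles _ _ _ _ _ _ I1 I2) as I12. apply is_CInt_swap in I3.
  pose proof (is_CInt_unique _ _ _ _ _ I12 I3) as E.
  set (X := RInt _ a b) in *. set (Y := RInt _ b c) in *. set (Z := RInt _ c a) in *.
  rewrite E. C_ring.
Qed.

Lemma seg_int_split psi u v s : 0 <= s <= 1 -> seg_cont psi u v ->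
  seg_int psi u v = (seg_int psi u (u + RtoC s * (v - u)) + seg_int psi (u + RtoC s * (v - u)) v)%C.
Proof.
  intros Hs H.
  pose proof (seg_int_collinear psi u (v - u) u (u + RtoC s * (v - u))%C v 0 s 1) as K.
  rewrite (seg_int_rev psi u v H) in K.
  assert (E: (seg_int psi u (u + RtoC s * (v - u)) + seg_int psi (u + RtoC s * (v - u)) v + - seg_int psi u v = 0)%C).
  { apply K; try C_ring. intros x Hx. apply H. unfold Rmin, Rmax in Hx. repeat destruct Rle_dec in Hx; lra. }
  set (X := seg_int psi u (u + RtoC s * (v - u))) in *. set (Y := seg_int psi (u + RtoC s * (v - u)) v) in *.
  set (Z := seg_int psi u v) in *.
  replace Z with (Z + (X + Y + - Z))%C by (rewrite E; C_ring). C_ring.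
Qed.

Lemma seg_int_norm_le psi u v B : seg_cont psi u v -> (forall t, 0 <= t <= 1 ->
  Cmod (psi (u + RtoC t * (v - u))%C) <= B) ->
  Cmod (seg_int psi u v) <= B * Cmod (v - u).
Proof.
  intros H HB. pose proof (seg_int_correct psi u v H) as K.
  pose proof (is_CInt_norm_le (seg_integrand psi u v) 0 1 (seg_int psi u v) (B * Cmod (v - u)) ltac:(lra)) as N.
  replace (B * Cmod (v - u)) with (B * Cmod (v - u) * (1 - 0)) by ring. apply N; auto.
  intros t Ht. unfold seg_integrand. rewrite Cmod_mult. apply Rmult_le_compat_r. apply Cmod_ge_0. auto.
Qed.

Lemma seg_int_minus psi1 psi2 u v : seg_cont psi1 u v -> seg_cont psi2 u v ->
  seg_int (fun z => psi1 z - psi2 z)%C u v = (seg_int psi1 u v - seg_int psi2 u v)%C.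
Proof.
  intros H1 H2. pose proof (is_CInt_minus _ _ _ _ _ _ (seg_int_correct _ _ _ H1) (seg_int_correct _ _ _ H2)) as K.
  unfold seg_int at 1. apply (is_RInt_unique (V:=C_R_CompleteNormedModule)).
  eapply is_CInt_ext. 2: exact K. intros; unfold seg_integrand; C_ring.
Qed.

Lemma seg_int_affine (A B u v : C) : seg_int (fun z => A + B * z)%C u v = ((A + B * u) * (v - u) + B * (v - u) * (v - u) * RtoC (/2))%C.
Proof.
  set (c1 := ((A + B * u) * (v - u))%C). set (c2 := (B * (v - u) * (v - u))%C).
  assert (D : forall x, is_derive (K:=R_AbsRing) (V:=C_R_NormedModule) (fun t => (RtoC t * c1 + RtoC (t * t / 2) * c2)%C) x (c1 + RtoC x * c2)%C).
  { intros x. 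
    assert (D1 := is_derive_scal_l (K:=R_AbsRing) (V:=C_R_NormedModule) (fun t => t) x 1 c1 (is_derive_id x)).
    assert (Dq : is_derive (fun t : R => t * t / 2) x x).
    { auto_derive. auto. field. }
    assert (D2 := is_derive_scal_l (K:=R_AbsRing) (V:=C_R_NormedModule) (fun t => t * t / 2) x x c2 Dq).
    pose proof (is_derive_plus (K:=R_AbsRing) (V:=C_R_NormedModule) _ _ x _ _ D1 D2) as D3.
    replace (c1 + RtoC x * c2)%C with (@plus C_R_NormedModule (scal 1 c1) (scal x c2)).
    2: { rewrite !scal_R_Cmult. change (Cplus (RtoC 1 * c1) (RtoC x * c2) = (c1 + RtoC x * c2)%C). C_ring. }
    eapply is_derive_ext. 2: exact D3. intros t; simpl. rewrite !scal_R_Cmult. reflexivity. }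
  pose proof (is_RInt_derive (V:=C_R_CompleteNormedModule) _ (fun t => (c1 + RtoC t * c2)%C) 0 1 (fun x _ => D x)
     (fun x _ => RC_cont_at_continuous _ x (RC_cont_at_affine c1 c2 x))) as K.
  assert (K2 : is_CInt (seg_integrand (fun z => (A + B * z)%C) u v) 0 1 (minus ((fun t : R_AbsRing => (t * c1 + (t * t / 2)%R * c2)%C) 1)
       ((fun t : R_AbsRing => (t * c1 + (t * t / 2)%R * c2)%C) 0))).
  { eapply is_CInt_ext. 2: exact K. intros t _. unfold seg_integrand, c1, c2. C_ring. }
  unfold seg_int. rewrite (is_RInt_unique (V:=C_R_CompleteNormedModule) _ 0 1 _ K2).
  change (Cplus (RtoC 1 * c1 + RtoC (1 * 1 / 2) * c2) (Copp (RtoC 0 * c1 + RtoC (0 * 0 / 2) * c2)) =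
      ((A + B * u) * (v - u) + B * (v - u) * (v - u) * RtoC (/ 2))%C).
    unfold c1, c2. apply C_ext; unfold Cminus, Cplus, Cmult, Copp, RtoC; simpl; field.
Qed.

(** * Goursat's lemma *)

(* Subtriangles are described in barycentric coordinates of a fixed triangle (u, v, w), so that the
   nested sequence of Goursat's argument lives in the standard simplex. *)
Definition bary := (R * R)%type.
Definition tri_pt (u v w : C) (c : bary) : C := (RtoC (fst c) * u + RtoC (snd c) * v + RtoC (1 - fst c - snd c) * w)%C.
Definition in_simplex (c : bary) := 0 <= fst c /\ 0 <= snd c /\ fst c + snd c <= 1.
Definition midp (a b : bary) : bary := ((fst a + fst b) / 2, (snd a + snd b) / 2).
Definition lerp (a b : bary) (t : R) : bary := (fst a + t * (fst b - fst a), snd a + t * (snd b - snd a)).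
Definition dist1 (a b : bary) := Rabs (fst a - fst b) + Rabs (snd a - snd b).
Definition tri_int psi a b c := (seg_int psi a b + seg_int psi b c + seg_int psi c a)%C.

Lemma in_simplex_lerp a b t : in_simplex a -> in_simplex b -> 0 <= t <= 1 -> in_simplex (lerp a b t).
Proof. unfold in_simplex, lerp; simpl. intros [? [? ?]] [? [? ?]] ?. nra. Qed.
Lemma in_simplex_midp a b : in_simplex a -> in_simplex b -> in_simplex (midp a b).
Proof. unfold in_simplex, midp; simpl. intros; lra. Qed.
Lemma tri_pt_lerp u v w a b t : tri_pt u v w (lerp a b t) = (tri_pt u v w a + RtoC t * (tri_pt u v w b - tri_pt u v w a))%C.
Proof. unfold tri_pt, lerp. destruct a, b; simpl. C_ring. Qed.
Lemma tri_pt_midp u v w a b : tri_pt u v w (midp a b) = (tri_pt u v w a + RtoC (/2) * (tri_pt u v w b - tri_pt u v w a))%C.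
Proof. unfold tri_pt, midp. destruct a, b; simpl. apply C_ext; unfold Cminus, Cplus, Cmult, Copp, RtoC; simpl; field. Qed.

Lemma dist1_midp a b c e : dist1 (midp a b) (midp c e) <= (dist1 a c + dist1 b e) / 2.
Proof.
  unfold dist1, midp; simpl.
  replace ((fst a + fst b) / 2 - (fst c + fst e) / 2) with ((fst a - fst c) / 2 + (fst b - fst e) / 2) by field.
  replace ((snd a + snd b) / 2 - (snd c + snd e) / 2) with ((snd a - snd c) / 2 + (snd b - snd e) / 2) by field.
  pose proof (Rabs_triang ((fst a - fst c) / 2) ((fst b - fst e) / 2)).
  pose proof (Rabs_triang ((snd a - snd c) / 2) ((snd b - snd e) / 2)).
  unfold Rdiv in *. rewrite !Rabs_mult in *. rewrite (Rabs_right (/2)) in * by lra. lra.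
Qed.
Lemma midpp a : midp a a = a.
Proof. destruct a; unfold midp; simpl; f_equal; field. Qed.
Lemma midpC a b : midp a b = midp b a.
Proof. unfold midp; f_equal; field. Qed.
Lemma dist1_refl a : dist1 a a = 0.
Proof. unfold dist1. rewrite !Rminus_diag, Rabs_R0. ring. Qed.
Lemma dist1_sym a b : dist1 a b = dist1 b a.
Proof. unfold dist1. rewrite (Rabs_minus_sym (fst a)), (Rabs_minus_sym (snd a)). ring. Qed.
Lemma dist1_triangle a b c : dist1 a c <= dist1 a b + dist1 b c.
Proof.
  unfold dist1.
  pose proof (Rabs_triang (fst a - fst b) (fst b - fst c)). pose proof (Rabs_triang (snd a - snd b) (snd b - snd c)).
  replace (fst a - fst b + (fst b - fst c)) with (fst a - fst c) in * by ring.
  replace (snd a - snd b + (snd b - snd c)) with (snd a - snd c) in * by ring. lra.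
Qed.
Lemma dist1_ge0 a b : 0 <= dist1 a b.
Proof. unfold dist1. pose proof (Rabs_pos (fst a - fst b)). pose proof (Rabs_pos (snd a - snd b)). lra. Qed.

Definition tri_scale (u v w : C) : R := Cmod (u - w) + Cmod (v - w).

Lemma tri_scale_ge0 u v w : 0 <= tri_scale u v w.
Proof. unfold tri_scale. pose proof (Cmod_ge_0 (u - w)). pose proof (Cmod_ge_0 (v - w)). lra. Qed.

Lemma tri_pt_lipschitz u v w a b : Cmod (tri_pt u v w a - tri_pt u v w b) <= tri_scale u v w * dist1 a b.
Proof.
  unfold tri_scale. replace (tri_pt u v w a - tri_pt u v w b)%C with (RtoC (fst a - fst b) * (u - w) + RtoC (snd a - snd b) * (v - w))%C
    by (unfold tri_pt; C_ring).
  eapply Rle_trans. apply Cmod_triangle. rewrite !Cmod_mult, !Cmod_R. unfold dist1.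
  pose proof (Cmod_ge_0 (u - w)%C). pose proof (Cmod_ge_0 (v - w)%C).
  pose proof (Rabs_pos (fst a - fst b)). pose proof (Rabs_pos (snd a - snd b)). nra.
Qed.

Lemma geometric_small K q eps : 0 <= q < 1 -> 0 < eps -> exists n, K * q ^ n < eps.
Proof.
  intros Hq He. pose proof (Rabs_pos K).
  destruct (pow_lt_1_zero q ltac:(rewrite Rabs_right; lra) (eps / (Rabs K + 1))) as [N HN].
  { apply Rdiv_lt_0_compat; lra. }
  exists N. specialize (HN N (Nat.le_refl N)). rewrite Rabs_right in HN by (apply Rle_ge, pow_le; lra).
  assert (0 <= q ^ N) by (apply pow_le; lra).
  apply Rle_lt_trans with ((Rabs K + 1) * q ^ N). pose proof (Rle_abs K). nra.
  apply Rlt_le_trans with ((Rabs K + 1) * (eps / (Rabs K + 1))).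
  apply Rmult_lt_compat_l; lra. right; field; lra.
Qed.

Lemma le_0_of_geometric K q x : 0 <= q < 1 -> (forall n, x <= K * q ^ n) -> x <= 0.
Proof.
  intros Hq H. apply le_epsilon. intros eps He. destruct (geometric_small K q eps Hq He) as [n Hn].
  specialize (H n). lra.
Qed.

Lemma geometric_cauchy_lim (a : nat -> bary) c : (forall n, dist1 (a (S n)) (a n) <= c * (/2)^n) ->
  exists L, forall n, dist1 L (a n) <= 4 * c * (/2)^n.
Proof.
  intros H.
  assert (Hc : 0 <= c). { specialize (H 0%nat). pose proof (dist1_ge0 (a 1%nat) (a 0%nat)). simpl in H. lra. }
  assert (Hp : forall n, 0 <= (/2)^n) by (intros; apply pow_le; lra).
  assert (S1 : forall n k, dist1 (a (n + k)%nat) (a n) <= 2 * c * (/2)^n - 2 * c * (/2)^(n + k)).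
  { intros n k. induction k.
    - rewrite Nat.add_0_r, dist1_refl. lra.
    - replace (n + S k)%nat with (S (n + k)) by lia.
      eapply Rle_trans. apply (dist1_triangle _ (a (n + k)%nat)). specialize (H (n + k)%nat).
      simpl pow. lra. }
  assert (S2 : forall n k, dist1 (a (n + k)%nat) (a n) <= 2 * c * (/2)^n).
  { intros n k. specialize (S1 n k). specialize (Hp (n + k)%nat). nra. }
  assert (Lim : forall (proj : bary -> R), (forall x y, Rabs (proj x - proj y) <= dist1 x y) ->
     exists l, forall n, Rabs (l - proj (a n)) <= 2 * c * (/2)^n).
  { intros proj Hproj.
    assert (CC : Cauchy_crit (fun n => proj (a n))).
    { intros eps He. destruct (geometric_small (4 * c) (/2) eps ltac:(lra) He) as [N HN]. exists N.
      intros n m Hn Hm. unfold R_dist.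
      pose proof (Hproj (a n) (a N)) as P1. pose proof (Hproj (a m) (a N)) as P2.
      replace n with (N + (n - N))%nat in P1 by lia. replace m with (N + (m - N))%nat in P2 by lia.
      pose proof (S2 N (n - N)%nat). pose proof (S2 N (m - N)%nat).
      replace (N + (n - N))%nat with n in * by lia. replace (N + (m - N))%nat with m in * by lia.
      pose proof (Rabs_triang (proj (a n) - proj (a N)) (proj (a N) - proj (a m))).
      rewrite (Rabs_minus_sym (proj (a N))) in H2.
      replace (proj (a n) - proj (a N) + (proj (a N) - proj (a m))) with (proj (a n) - proj (a m)) in H2 by ring.
      lra. }
    destruct (Rcomplete.R_complete _ CC) as [l Hl]. exists l. intros n.
    apply le_epsilon. intros eps He. destruct (Hl eps He) as [N HN].
    specialize (HN (n + N)%nat ltac:(lia)). unfold R_dist in HN.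
    pose proof (Hproj (a (n + N)%nat) (a n)). pose proof (S2 n N).
    pose proof (Rabs_triang (l - proj (a (n + N)%nat)) (proj (a (n + N)%nat) - proj (a n))).
    replace (l - proj (a (n + N)%nat) + (proj (a (n + N)%nat) - proj (a n))) with (l - proj (a n)) in H2 by ring.
    rewrite Rabs_minus_sym in HN. lra. }
  destruct (Lim fst) as [l1 H1]. { intros x y. unfold dist1. pose proof (Rabs_pos (snd x - snd y)). lra. }
  destruct (Lim snd) as [l2 H2]. { intros x y. unfold dist1. pose proof (Rabs_pos (fst x - fst y)). lra. }
  exists (l1, l2). intros n. unfold dist1; simpl. specialize (H1 n). specialize (H2 n). lra.
Qed.

Lemma in_simplex_of_geometric (a : nat -> bary) K L : (forall n, in_simplex (a n)) ->
  (forall n, dist1 L (a n) <= K * (/2)^n) -> in_simplex L.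
Proof.
  intros Ha HL. unfold in_simplex.
  assert (Hfst : forall n, Rabs (fst L - fst (a n)) <= K * (/2)^n).
  { intros n. specialize (HL n). unfold dist1 in HL. pose proof (Rabs_pos (snd L - snd (a n))). lra. }
  assert (Hsnd : forall n, Rabs (snd L - snd (a n)) <= K * (/2)^n).
  { intros n. specialize (HL n). unfold dist1 in HL. pose proof (Rabs_pos (fst L - fst (a n))). lra. }
  repeat split.
  - enough (- fst L <= 0) by lra. apply (le_0_of_geometric K (/2)); [lra|]. intros n.
    destruct (Ha n) as [H1 _]. pose proof (Hfst n). pose proof (Rle_abs (- (fst L - fst (a n)))).
    rewrite Rabs_Ropp in *. lra.
  - enough (- snd L <= 0) by lra. apply (le_0_of_geometric K (/2)); [lra|]. intros n.
    destruct (Ha n) as [_ [H1 _]]. pose proof (Hsnd n). pose proof (Rle_abs (- (snd L - snd (a n)))).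
    rewrite Rabs_Ropp in *. lra.
  - enough (fst L + snd L - 1 <= 0) by lra. apply (le_0_of_geometric (2 * K) (/2)); [lra|]. intros n.
    destruct (Ha n) as [_ [_ H1]]. pose proof (Hfst n). pose proof (Hsnd n).
    pose proof (Rle_abs (fst L - fst (a n))). pose proof (Rle_abs (snd L - snd (a n))). lra.
Qed.

Lemma Cmod_lerp_le X Y z0 r t : 0 <= t <= 1 -> Cmod (X - z0) <= r -> Cmod (Y - z0) <= r ->
  Cmod (X + RtoC t * (Y - X) - z0) <= r.
Proof.
  intros Ht HX HY. replace (X + RtoC t * (Y - X) - z0)%C with (RtoC (1 - t) * (X - z0) + RtoC t * (Y - z0))%C by C_ring.
  eapply Rle_trans. apply Cmod_triangle. rewrite !Cmod_mult, !Cmod_R, !Rabs_right by lra. nra.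
Qed.

Lemma tri_int_near_derive psi X Y Z z0 l0 eps r : seg_cont psi X Y -> seg_cont psi Y Z -> seg_cont psi Z X ->
  0 <= eps ->
  (forall x, Cmod (x - z0) <= r -> Cmod (psi x - psi z0 - l0 * (x - z0)) <= eps * Cmod (x - z0)) ->
  Cmod (X - z0) <= r -> Cmod (Y - z0) <= r -> Cmod (Z - z0) <= r ->
  Cmod (tri_int psi X Y Z) <= eps * r * (Cmod (Y - X) + Cmod (Z - Y) + Cmod (X - Z)).
Proof.
  intros H1 H2 H3 He Hd HX HY HZ.
  set (A := (psi z0 - l0 * z0)%C).
  set (phi := fun x => (psi x - (A + l0 * x))%C).
  assert (HL : forall X Y, seg_cont (fun x => A + l0 * x)%C X Y).
  { intros X' Y' t _. exact (is_Cderive_cont_at _ _ _ (is_Cderive_affine A l0 _)). }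
  assert (Hphi : forall X Y, seg_cont psi X Y -> seg_cont phi X Y).
  { intros X' Y' H t Ht. apply C_cont_at_minus. apply H; auto. apply HL; auto. }
  assert (E : forall X Y, seg_cont psi X Y -> seg_int psi X Y = (seg_int phi X Y + seg_int (fun x => A + l0 * x)%C X Y)%C).
  { intros X' Y' H. unfold phi. rewrite seg_int_minus; auto. C_ring. }
  assert (B : forall X Y, seg_cont psi X Y -> Cmod (X - z0) <= r -> Cmod (Y - z0) <= r -> Cmod (seg_int phi X Y) <= eps * r * Cmod (Y - X)).
  { intros X' Y' H HX' HY'. apply seg_int_norm_le. apply Hphi; auto.
    intros t Ht. pose proof (Cmod_lerp_le X' Y' z0 r t Ht HX' HY') as D.
    unfold phi. replace (psi (X' + RtoC t * (Y' - X')) - (A + l0 * (X' + RtoC t * (Y' - X'))))%C with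
       (psi (X' + RtoC t * (Y' - X')) - psi z0 - l0 * ((X' + RtoC t * (Y' - X')) - z0))%C by (unfold A; C_ring).
    eapply Rle_trans. apply Hd; auto. apply Rmult_le_compat_l; auto. }
  unfold tri_int. rewrite (E X Y H1), (E Y Z H2), (E Z X H3). rewrite !seg_int_affine.
  replace (seg_int phi X Y + ((A + l0 * X) * (Y - X) + l0 * (Y - X) * (Y - X) * RtoC (/ 2)) +
    (seg_int phi Y Z + ((A + l0 * Y) * (Z - Y) + l0 * (Z - Y) * (Z - Y) * RtoC (/ 2))) +
    (seg_int phi Z X + ((A + l0 * Z) * (X - Z) + l0 * (X - Z) * (X - Z) * RtoC (/ 2))))%C
    with (seg_int phi X Y + seg_int phi Y Z + seg_int phi Z X)%C.
  2: { apply C_ext; unfold Cminus, Cplus, Cmult, Copp, RtoC; simpl; field. }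
  pose proof (B X Y H1 HX HY). pose proof (B Y Z H2 HY HZ). pose proof (B Z X H3 HZ HX).
  eapply Rle_trans. apply Cmod_triangle. pose proof (Cmod_triangle (seg_int phi X Y) (seg_int phi Y Z)). lra.
Qed.

Definition subtri := (bary * bary * bary)%type.
Definition corner_a (t : subtri) : subtri := let '(a, b, c) := t in (a, midp a b, midp c a).
Definition corner_b (t : subtri) : subtri := let '(a, b, c) := t in (midp a b, b, midp b c).
Definition corner_c (t : subtri) : subtri := let '(a, b, c) := t in (midp c a, midp b c, c).
Definition medial (t : subtri) : subtri := let '(a, b, c) := t in (midp b c, midp c a, midp a b).
Definition in_simplex3 (t : subtri) := let '(a, b, c) := t in in_simplex a /\ in_simplex b /\ in_simplex c.
Definition perimeter (t : subtri) := let '(a, b, c) := t in dist1 a b + dist1 b c + dist1 c a.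
Definition vertex1 (t : subtri) : bary := let '(a, b, c) := t in a.

Definition diff_on_tri psi u v w := forall c, in_simplex c -> exists l, is_Cderive psi (tri_pt u v w c) l.

Lemma seg_cont_tri psi u v w a b : diff_on_tri psi u v w -> in_simplex a -> in_simplex b ->
  seg_cont psi (tri_pt u v w a) (tri_pt u v w b).
Proof.
  intros H Ha Hb t Ht. rewrite <- tri_pt_lerp. destruct (H _ (in_simplex_lerp a b t Ha Hb Ht)) as [l Hl].
  exact (is_Cderive_cont_at _ _ _ Hl).
Qed.

Lemma subdiv_in_simplex3 t : in_simplex3 t -> in_simplex3 (corner_a t) /\ in_simplex3 (corner_b t) /\
  in_simplex3 (corner_c t) /\ in_simplex3 (medial t).
Proof.
  destruct t as [[a b] c]. intros [Ha [Hb Hc]]. simpl.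
  pose proof (in_simplex_midp a b Ha Hb). pose proof (in_simplex_midp b c Hb Hc). pose proof (in_simplex_midp c a Hc Ha). tauto.
Qed.

Lemma subdiv_perimeter t : perimeter (corner_a t) <= perimeter t / 2 /\
  perimeter (corner_b t) <= perimeter t / 2 /\ perimeter (corner_c t) <= perimeter t / 2 /\
  perimeter (medial t) <= perimeter t / 2.
Proof.
  destruct t as [[a b] c]. simpl.
  pose proof (dist1_refl a). pose proof (dist1_refl b). pose proof (dist1_refl c).
  pose proof (dist1_sym a b). pose proof (dist1_sym b c). pose proof (dist1_sym c a).
  pose proof (dist1_midp a a a b) as X1. rewrite midpp in X1.
  pose proof (dist1_midp a b a c) as X2. rewrite (midpC a c) in X2.
  pose proof (dist1_midp c a a a) as X3. rewrite midpp in X3.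
  pose proof (dist1_midp a b b b) as X4. rewrite midpp in X4.
  pose proof (dist1_midp b b b c) as X5. rewrite midpp in X5.
  pose proof (dist1_midp b c b a) as X6. rewrite (midpC b a) in X6.
  pose proof (dist1_midp c a c b) as X7. rewrite (midpC c b) in X7.
  pose proof (dist1_midp b c c c) as X8. rewrite midpp in X8.
  pose proof (dist1_midp c c c a) as X9. rewrite midpp in X9.
  pose proof (dist1_midp c b c a) as Y1. rewrite (midpC c b) in Y1.
  pose proof (dist1_midp a c a b) as Y2. rewrite (midpC a c) in Y2.
  pose proof (dist1_midp b a b c) as Y3. rewrite (midpC b a) in Y3.
  repeat split; lra.
Qed.

Lemma subdiv_vertex1 t : dist1 (vertex1 (corner_a t)) (vertex1 t) <= perimeter t /\
  dist1 (vertex1 (corner_b t)) (vertex1 t) <= perimeter t /\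
  dist1 (vertex1 (corner_c t)) (vertex1 t) <= perimeter t /\ dist1 (vertex1 (medial t)) (vertex1 t) <= perimeter t.
Proof.
  destruct t as [[a b] c]. simpl.
  pose proof (dist1_refl a). pose proof (dist1_ge0 a b). pose proof (dist1_ge0 b c). pose proof (dist1_ge0 c a).
  pose proof (dist1_midp a b a a) as X1. rewrite midpp in X1.
  pose proof (dist1_midp c a a a) as X2. rewrite midpp in X2.
  pose proof (dist1_midp b c a a) as X3. rewrite midpp in X3.
  pose proof (dist1_sym a b). pose proof (dist1_sym a c). pose proof (dist1_triangle b a c). pose proof (dist1_sym c a).
  repeat split; lra.
Qed.

Section Goursat.

Variables (psi : C -> C) (u v w : C).

Definition subtri_int (t : subtri) : C :=
  let '(a, b, c) := t in tri_int psi (tri_pt u v w a) (tri_pt u v w b) (tri_pt u v w c).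

Definition larger (x y : subtri) : subtri :=
  if Rle_dec (Cmod (subtri_int x)) (Cmod (subtri_int y)) then y else x.

Definition pick_worst (t : subtri) : subtri :=
  larger (larger (corner_a t) (corner_b t)) (larger (corner_c t) (medial t)).

Lemma larger_ge x y :
  Cmod (subtri_int x) <= Cmod (subtri_int (larger x y)) /\ Cmod (subtri_int y) <= Cmod (subtri_int (larger x y)).
Proof. unfold larger. destruct Rle_dec; lra. Qed.

Lemma larger_cases x y : larger x y = x \/ larger x y = y.
Proof. unfold larger. destruct Rle_dec; auto. Qed.

Lemma pick_worst_cases t :
  pick_worst t = corner_a t \/ pick_worst t = corner_b t \/ pick_worst t = corner_c t \/ pick_worst t = medial t.
Proof.
  unfold pick_worst.
  destruct (larger_cases (corner_a t) (corner_b t)) as [E1|E1]; rewrite E1;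
  destruct (larger_cases (corner_c t) (medial t)) as [E2|E2]; rewrite E2;
  match goal with |- context [larger ?x ?y] => destruct (larger_cases x y) as [E3|E3]; rewrite E3 end; tauto.
Qed.

Lemma pick_worst_props t : in_simplex3 t ->
  in_simplex3 (pick_worst t) /\ perimeter (pick_worst t) <= perimeter t / 2 /\
  dist1 (vertex1 (pick_worst t)) (vertex1 t) <= perimeter t.
Proof.
  intros Ht. pose proof (subdiv_in_simplex3 t Ht). pose proof (subdiv_perimeter t). pose proof (subdiv_vertex1 t).
  destruct (pick_worst_cases t) as [E|[E|[E|E]]]; rewrite E; tauto.
Qed.

Hypothesis Hdiff : diff_on_tri psi u v w.

Lemma seg_int_split_midp a b : in_simplex a -> in_simplex b ->
  seg_int psi (tri_pt u v w a) (tri_pt u v w b) =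
  (seg_int psi (tri_pt u v w a) (tri_pt u v w (midp a b)) + seg_int psi (tri_pt u v w (midp a b)) (tri_pt u v w b))%C.
Proof. intros Ha Hb. rewrite tri_pt_midp. apply seg_int_split. lra. apply seg_cont_tri; auto. Qed.

Lemma subtri_int_decomp t : in_simplex3 t ->
  subtri_int t = (subtri_int (corner_a t) + subtri_int (corner_b t) + subtri_int (corner_c t) + subtri_int (medial t))%C.
Proof.
  destruct t as [[a b] c]. intros [Ha [Hb Hc]]. simpl. unfold tri_int.
  rewrite (seg_int_split_midp a b), (seg_int_split_midp b c), (seg_int_split_midp c a) by auto.
  assert (Hab := in_simplex_midp a b Ha Hb). assert (Hbc := in_simplex_midp b c Hb Hc).
  assert (Hca := in_simplex_midp c a Hc Ha).
  rewrite (seg_int_rev psi (tri_pt u v w (midp a b)) (tri_pt u v w (midp c a))) by (apply seg_cont_tri; auto).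
  rewrite (seg_int_rev psi (tri_pt u v w (midp b c)) (tri_pt u v w (midp a b))) by (apply seg_cont_tri; auto).
  rewrite (seg_int_rev psi (tri_pt u v w (midp c a)) (tri_pt u v w (midp b c))) by (apply seg_cont_tri; auto).
  C_ring.
Qed.

Lemma pick_worst_ge t : in_simplex3 t -> Cmod (subtri_int t) <= 4 * Cmod (subtri_int (pick_worst t)).
Proof.
  intros Ht. rewrite (subtri_int_decomp t Ht). unfold pick_worst.
  destruct (larger_ge (corner_a t) (corner_b t)). destruct (larger_ge (corner_c t) (medial t)).
  destruct (larger_ge (larger (corner_a t) (corner_b t)) (larger (corner_c t) (medial t))).
  pose proof (Cmod_triangle (subtri_int (corner_a t) + subtri_int (corner_b t) + subtri_int (corner_c t))
    (subtri_int (medial t))).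
  pose proof (Cmod_triangle (subtri_int (corner_a t) + subtri_int (corner_b t)) (subtri_int (corner_c t))).
  pose proof (Cmod_triangle (subtri_int (corner_a t)) (subtri_int (corner_b t))). lra.
Qed.

Definition std_subtri : subtri := ((1, 0), (0, 1), (0, 0)).

Lemma perimeter_std : perimeter std_subtri = 4.
Proof.
  unfold perimeter, std_subtri, dist1; simpl.
  rewrite Rminus_0_r, Rminus_0_l, Rminus_diag, Rabs_Ropp, Rabs_R1, Rabs_R0. ring.
Qed.

Definition worst_seq (n : nat) : subtri := Nat.iter n pick_worst std_subtri.

Lemma subtri_int_std : subtri_int std_subtri = tri_int psi u v w.
Proof.
  unfold std_subtri, subtri_int.
  replace (tri_pt u v w (1, 0)) with u by (unfold tri_pt; C_ring).
  replace (tri_pt u v w (0, 1)) with v by (unfold tri_pt; C_ring).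
  replace (tri_pt u v w (0, 0)) with w by (unfold tri_pt; C_ring).
  reflexivity.
Qed.

Lemma worst_seq_spec n : in_simplex3 (worst_seq n) /\ perimeter (worst_seq n) <= 4 * (/2)^n /\
  Cmod (tri_int psi u v w) <= 4^n * Cmod (subtri_int (worst_seq n)).
Proof.
  induction n as [|n [I1 [I2 I3]]].
  - change (worst_seq 0) with std_subtri. rewrite perimeter_std, subtri_int_std. simpl.
    unfold std_subtri, in_simplex3, in_simplex; simpl. repeat split; lra.
  - change (worst_seq (S n)) with (pick_worst (worst_seq n)).
    destruct (pick_worst_props (worst_seq n) I1) as [J1 [J2 _]].
    pose proof (pick_worst_ge (worst_seq n) I1). simpl pow.
    assert (0 <= 4 ^ n) by (apply pow_le; lra).
    repeat split; auto; nra.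
Qed.

Lemma worst_seq_limit : exists L, in_simplex L /\ forall n, dist1 L (vertex1 (worst_seq n)) <= 16 * (/2)^n.
Proof.
  destruct (geometric_cauchy_lim (fun n => vertex1 (worst_seq n)) 4) as [L HL].
  { intros n. change (worst_seq (S n)) with (pick_worst (worst_seq n)).
    destruct (worst_seq_spec n) as [I1 [I2 _]]. destruct (pick_worst_props _ I1) as [_ [_ J3]]. lra. }
  exists L. split.
  - apply (in_simplex_of_geometric (fun n => vertex1 (worst_seq n)) 16); [|replace 16 with (4 * 4) by ring; exact HL].
    intros n. destruct (worst_seq_spec n) as [I1 _]. destruct (worst_seq n) as [[a b] c]. apply I1.
  - replace 16 with (4 * 4) by ring. exact HL.
Qed.

Lemma subtri_int_le_near_derive L l0 eps rho t : in_simplex3 t -> perimeter t <= rho ->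
  dist1 L (vertex1 t) <= 4 * rho -> 0 <= eps ->
  (forall x, Cmod (x - tri_pt u v w L) <= 5 * tri_scale u v w * rho ->
     Cmod (psi x - psi (tri_pt u v w L) - l0 * (x - tri_pt u v w L)) <= eps * Cmod (x - tri_pt u v w L)) ->
  Cmod (subtri_int t) <= eps * (5 * tri_scale u v w * rho) * (tri_scale u v w * rho).
Proof.
  destruct t as [[a b] c]. intros [Ha [Hb Hc]] Hper HL He Hd. simpl in Hper, HL |- *.
  pose proof (tri_scale_ge0 u v w). set (K := tri_scale u v w) in *. set (P := tri_pt u v w) in *.
  pose proof (dist1_ge0 a b). pose proof (dist1_ge0 b c). pose proof (dist1_ge0 c a).
  assert (Near : forall x, dist1 x a <= rho -> Cmod (P x - P L) <= 5 * K * rho).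
  { intros x Hx. eapply Rle_trans. apply tri_pt_lipschitz. fold K.
    pose proof (dist1_triangle x a L). rewrite (dist1_sym a L) in *.
    replace (5 * K * rho) with (K * (5 * rho)) by ring. apply Rmult_le_compat_l; lra. }
  assert (Bnd : Cmod (P b - P a) + Cmod (P c - P b) + Cmod (P a - P c) <= K * rho).
  { pose proof (tri_pt_lipschitz u v w b a). pose proof (tri_pt_lipschitz u v w c b).
    pose proof (tri_pt_lipschitz u v w a c). fold K P in H3, H4, H5.
    rewrite (dist1_sym b a), (dist1_sym c b), (dist1_sym a c) in *. nra. }
  eapply Rle_trans.
  - apply (tri_int_near_derive psi (P a) (P b) (P c) (P L) l0 eps (5 * K * rho));
      try apply seg_cont_tri; auto; apply Near.
    + rewrite dist1_refl. lra.
    + rewrite dist1_sym. lra.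
    + lra.
  - apply Rmult_le_compat_l; [repeat apply Rmult_le_pos; lra | exact Bnd].
Qed.

Lemma goursat_le_eps eps : 0 < eps -> Cmod (tri_int psi u v w) <= 80 * tri_scale u v w ^ 2 * eps.
Proof.
  intros He. destruct worst_seq_limit as [L [HL Hlim]].
  destruct (Hdiff L HL) as [l0 Hl0].
  destruct (is_Cderive_approx _ _ _ Hl0 eps He) as [dl [Hdl Hd]].
  set (K := tri_scale u v w). pose proof (tri_scale_ge0 u v w).
  destruct (geometric_small (20 * K) (/2) dl ltac:(lra) Hdl) as [n Hn].
  destruct (worst_seq_spec n) as [I1 [I2 I3]].
  assert (Hp : 0 < (/2)^n) by (apply pow_lt; lra).
  pose proof (subtri_int_le_near_derive L l0 eps (4 * (/2)^n) (worst_seq n) I1 I2 ltac:(specialize (Hlim n); lra)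
    ltac:(lra) ltac:(intros x Hx; apply Hd; fold K in Hx; lra)) as Est.
  fold K in Est.
  assert (Q : 4 ^ n * ((/2)^n * (/2)^n) = 1).
  { rewrite <- !Rpow_mult_distr. replace (4 * (/2 * /2)) with 1 by field. apply pow1. }
  assert (0 <= 4 ^ n) by (apply pow_le; lra).
  eapply Rle_trans. exact I3.
  eapply Rle_trans. apply Rmult_le_compat_l. lra. exact Est.
  right. transitivity (80 * K ^ 2 * eps * (4 ^ n * ((/2)^n * (/2)^n))). ring. rewrite Q. ring.
Qed.

Theorem goursat : tri_int psi u v w = 0%C.
Proof.
  apply Cmod_eq_0, Rle_antisym; [|apply Cmod_ge_0].
  apply le_epsilon. intros eps He.
  set (X := 80 * tri_scale u v w ^ 2).
  assert (0 <= X) by (unfold X; pose proof (tri_scale_ge0 u v w); nra).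
  destruct (Req_dec X 0) as [Z|Z].
  - pose proof (goursat_le_eps 1 ltac:(lra)). fold X in H0. lra.
  - pose proof (goursat_le_eps (eps / X) ltac:(apply Rdiv_lt_0_compat; lra)). fold X in H0.
    replace (X * (eps / X)) with eps in H0 by (field; lra). lra.
Qed.

End Goursat.

(** * Cauchy's theorem on a disc *)

Definition in_disc (a : C) (R0 : R) (z : C) := Cmod (z - a) < R0.
(* One exceptional point where [psi] is only continuous: this is the case of the difference quotient
   (f z - f λ) / (z - λ) in the proof of the integral formula. *)
Definition holo_except (psi : C -> C) (a : C) (R0 : R) (p : C) :=
  in_disc a R0 p /\ C_cont_at psi p /\ forall z, in_disc a R0 z -> z <> p -> exists l, is_Cderive psi z l.

Lemma in_disc_lerp a R0 X Y t : in_disc a R0 X -> in_disc a R0 Y -> 0 <= t <= 1 ->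
  in_disc a R0 (X + RtoC t * (Y - X))%C.
Proof.
  unfold in_disc. intros HX HY Ht.
  replace (X + RtoC t * (Y - X) - a)%C with (RtoC (1 - t) * (X - a) + RtoC t * (Y - a))%C by C_ring.
  eapply Rle_lt_trans. apply Cmod_triangle. rewrite !Cmod_mult, !Cmod_R, !Rabs_right by lra.
  destruct (Req_dec t 0). subst. nra. nra.
Qed.

Lemma in_disc_line a R0 p d al be x : in_disc a R0 (p + RtoC al * d)%C -> in_disc a R0 (p + RtoC be * d)%C ->
  al <= x <= be ->
  in_disc a R0 (p + RtoC x * d)%C.
Proof.
  intros H1 H2 Hx. destruct (Req_dec al be) as [E|E].
  - subst. replace x with be by lra. auto.
  - replace (p + RtoC x * d)%C with ((p + RtoC al * d) + RtoC ((x - al) / (be - al)) * ((p + RtoC be * d) - (p + RtoC al * d)))%C.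
    apply in_disc_lerp; auto. split. apply Rdiv_le_0_compat; lra. apply Rmult_le_reg_r with (be - al). lra.
    unfold Rdiv. rewrite Rmult_assoc, Rinv_l by lra. lra.
    apply C_ext; unfold Cminus, Cplus, Cmult, Copp, RtoC; simpl; field; lra.
Qed.

Lemma in_disc_tri_pt a R0 u v w c : in_disc a R0 u -> in_disc a R0 v -> in_disc a R0 w -> in_simplex c ->
  in_disc a R0 (tri_pt u v w c).
Proof.
  unfold in_disc, in_simplex, tri_pt. intros Hu Hv Hw [H1 [H2 H3]].
  replace (RtoC (fst c) * u + RtoC (snd c) * v + RtoC (1 - fst c - snd c) * w - a)%C with
    (RtoC (fst c) * (u - a) + RtoC (snd c) * (v - a) + RtoC (1 - fst c - snd c) * (w - a))%C by C_ring.
  set (c1 := fst c) in *. set (c2 := snd c) in *.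
  pose proof (Cmod_triangle (RtoC c1 * (u - a) + RtoC c2 * (v - a)) (RtoC (1 - c1 - c2) * (w - a))).
  pose proof (Cmod_triangle (RtoC c1 * (u - a)) (RtoC c2 * (v - a))).
  rewrite !Cmod_mult, !Cmod_R, !(Rabs_right c1), !(Rabs_right c2), !(Rabs_right (1 - c1 - c2)) in * by lra.
  set (m := Rmin (R0 - Cmod (u - a)) (Rmin (R0 - Cmod (v - a)) (R0 - Cmod (w - a)))).
  assert (m <= R0 - Cmod (u - a)) by apply Rmin_l.
  assert (m <= R0 - Cmod (v - a)) by (eapply Rle_trans; [apply Rmin_r|apply Rmin_l]).
  assert (m <= R0 - Cmod (w - a)) by (eapply Rle_trans; [apply Rmin_r|apply Rmin_r]).
  assert (0 < m) by (unfold m; repeat apply Rmin_glb_lt; lra).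
  assert (c1 * (R0 - Cmod (u - a)) + c2 * (R0 - Cmod (v - a)) + (1 - c1 - c2) * (R0 - Cmod (w - a)) >= m) by nra.
  nra.
Qed.

Lemma holo_except_cont_at psi a R0 p z : holo_except psi a R0 p -> in_disc a R0 z -> C_cont_at psi z.
Proof.
  intros [_ [Hp H]] Hz. destruct (Ceq_dec z p) as [->|E]; auto.
  destruct (H z Hz E) as [l Hl]. exact (is_Cderive_cont_at _ _ _ Hl).
Qed.

Lemma holo_except_seg_cont psi a R0 p X Y : holo_except psi a R0 p -> in_disc a R0 X -> in_disc a R0 Y ->
  seg_cont psi X Y.
Proof. intros H HX HY t Ht. apply (holo_except_cont_at psi a R0 p); auto. apply in_disc_lerp; auto. Qed.

Definition cross2 (x y : C) := fst x * snd y - snd x * fst y.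

Lemma cross2_indep X Y al be : cross2 X Y <> 0 -> (RtoC al * X + RtoC be * Y)%C = 0%C -> al = 0 /\ be = 0.
Proof.
  intros Hc E. unfold cross2 in Hc.
  assert (E1 : al * fst X + be * fst Y = 0) by (apply (f_equal fst) in E; simpl in E; lra).
  assert (E2 : al * snd X + be * snd Y = 0) by (apply (f_equal snd) in E; simpl in E; lra).
  split.
  - assert (al * (fst X * snd Y - snd X * fst Y) = 0) by (replace (al * (fst X * snd Y - snd X * fst Y)) with (snd Y * (al * fst X + be * fst Y) - fst Y * (al * snd X + be * snd Y)) by ring; rewrite E1, E2; ring).
    destruct (Rmult_integral _ _ H); auto. contradiction.
  - assert (be * (fst X * snd Y - snd X * fst Y) = 0) by (replace (be * (fst X * snd Y - snd X * fst Y)) with (fst X * (al * snd X + be * snd Y) - snd X * (al * fst X + be * fst Y)) by ring; rewrite E1, E2; ring).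
    destruct (Rmult_integral _ _ H); auto. contradiction.
Qed.

Lemma collinear_rep X Y : cross2 X Y = 0 -> X <> 0%C -> exists s, Y = (RtoC s * X)%C.
Proof.
  intros Hc HX. unfold cross2 in Hc.
  assert (N : fst X * fst X + snd X * snd X <> 0).
  { intros N. apply HX. destruct X as [x1 x2]; simpl in *. assert (x1 = 0) by nra. assert (x2 = 0) by nra. subst. reflexivity. }
  exists ((fst Y * fst X + snd Y * snd X) / (fst X * fst X + snd X * snd X)).
  destruct X as [x1 x2]; destruct Y as [y1 y2]; simpl in *.
  assert (A1 : y1 * (x1 * x1 + x2 * x2) - (y1 * x1 + y2 * x2) * x1 = - x2 * (x1 * y2 - x2 * y1)) by ring.
  assert (A2 : y2 * (x1 * x1 + x2 * x2) - (y1 * x1 + y2 * x2) * x2 = x1 * (x1 * y2 - x2 * y1)) by ring.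
  rewrite Hc in A1, A2.
  apply C_ext; unfold RtoC, Cmult; simpl.
  - apply Rmult_eq_reg_r with (x1 * x1 + x2 * x2); auto. field_simplify; auto. nra.
  - apply Rmult_eq_reg_r with (x1 * x1 + x2 * x2); auto. field_simplify; auto. nra.
Qed.

Lemma cauchy_tri_collinear psi a R0 p u v : holo_except psi a R0 p -> in_disc a R0 u -> in_disc a R0 v ->
  cross2 (u - p) (v - p) = 0 ->
  tri_int psi p u v = 0%C.
Proof.
  intros H Hu Hv Hc. pose proof H as [Hp [Hcp Hd]].
  assert (Cl : forall d al be x, in_disc a R0 (p + RtoC al * d)%C -> in_disc a R0 (p + RtoC be * d)%C -> al <= x <= be ->
    C_cont_at psi (p + RtoC x * d)%C).
  { intros d al be x H1 H2 Hx. apply (holo_except_cont_at psi a R0 p _ H). apply (in_disc_line a R0 p d al be); auto. }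
  destruct (Ceq_dec u p) as [->|Eu].
  - unfold tri_int. apply (seg_int_collinear psi p (v - p) p p v 0 0 1); try C_ring.
    intros x Hx. assert (0 <= x <= 1) by (unfold Rmin, Rmax in Hx; repeat destruct Rle_dec in Hx; lra).
    apply (Cl (v - p)%C 0 1); try lra.
    replace (p + RtoC 0 * (v - p))%C with p by C_ring. auto. replace (p + RtoC 1 * (v - p))%C with v by C_ring. auto.
  - destruct (collinear_rep (u - p) (v - p) Hc) as [s Hs].
    { intros E. apply Eu. apply (f_equal (fun z => z + p)%C) in E. replace (u - p + p)%C with u in E by C_ring. rewrite E. C_ring. }
    assert (Ev : v = (p + RtoC s * (u - p))%C). { replace v with ((v - p) + p)%C by C_ring. rewrite Hs. C_ring. }
    unfold tri_int. apply (seg_int_collinear psi p (u - p) p u v 0 1 s); try C_ring; auto.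
    assert (I0 : in_disc a R0 (p + RtoC 0 * (u - p))%C) by (replace (p + RtoC 0 * (u - p))%C with p by C_ring; auto).
    assert (I1 : in_disc a R0 (p + RtoC 1 * (u - p))%C) by (replace (p + RtoC 1 * (u - p))%C with u by C_ring; auto).
    assert (Is : in_disc a R0 (p + RtoC s * (u - p))%C) by (rewrite <- Ev; auto).
    intros x Hx. unfold Rmin, Rmax in Hx. repeat destruct Rle_dec in Hx.
    all: first [ apply (Cl _ 0 1); auto; lra | apply (Cl _ s 1); auto; lra | apply (Cl _ 0 s); auto; lra | lra ].
Qed.

Section CauchyExcept.

Variables (psi : C -> C) (a : C) (R0 : R) (p : C).
Hypothesis Hex : holo_except psi a R0 p.

Lemma goursat_avoiding u v w : in_disc a R0 u -> in_disc a R0 v -> in_disc a R0 w ->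
  (forall c, in_simplex c -> tri_pt u v w c <> p) -> tri_int psi u v w = 0%C.
Proof.
  intros Hu Hv Hw Hp. apply goursat. intros c Hc. destruct Hex as [_ [_ Hd]].
  apply Hd; auto. apply in_disc_tri_pt; auto.
Qed.

Lemma tri_int_shrink u v t : in_disc a R0 u -> in_disc a R0 v -> cross2 (u - p) (v - p) <> 0 -> 0 < t <= 1 ->
  tri_int psi p u v = tri_int psi p (p + RtoC t * (u - p)) (p + RtoC t * (v - p)).
Proof.
  intros Hu Hv Hc Ht. pose proof Hex as [Hp _].
  set (ut := (p + RtoC t * (u - p))%C). set (vt := (p + RtoC t * (v - p))%C).
  assert (Iut : in_disc a R0 ut) by (apply in_disc_lerp; auto; lra).
  assert (Ivt : in_disc a R0 vt) by (apply in_disc_lerp; auto; lra).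
  assert (Seg : forall X Y, in_disc a R0 X -> in_disc a R0 Y -> seg_cont psi X Y)
    by (intros; eapply holo_except_seg_cont; eauto).
  assert (Z1 : tri_int psi ut u v = 0%C).
  { apply goursat_avoiding; auto. intros c [? [? ?]] E.
    assert (E' : (RtoC (fst c * t + snd c) * (u - p) + RtoC (1 - fst c - snd c) * (v - p))%C = 0%C).
    { transitivity (tri_pt ut u v c - p)%C. unfold tri_pt, ut. C_ring. rewrite E. C_ring. }
    destruct (cross2_indep _ _ _ _ Hc E'). nra. }
  assert (Z2 : tri_int psi ut v vt = 0%C).
  { apply goursat_avoiding; auto. intros c [? [? ?]] E.
    assert (E' : (RtoC (fst c * t) * (u - p) + RtoC (snd c + (1 - fst c - snd c) * t) * (v - p))%C = 0%C).
    { transitivity (tri_pt ut v vt c - p)%C. unfold tri_pt, ut, vt. C_ring. rewrite E. C_ring. }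
    destruct (cross2_indep _ _ _ _ Hc E'). nra. }
  unfold tri_int in *.
  rewrite (seg_int_split psi p u t) by (auto; lra). fold ut.
  rewrite (seg_int_split psi v p (1 - t)) by (auto; lra).
  replace (v + RtoC (1 - t) * (p - v))%C with vt by (unfold vt; C_ring).
  rewrite (seg_int_rev psi ut v) in Z1 by auto. rewrite (seg_int_rev psi ut vt) in Z2 by auto.
  set (X1 := seg_int psi p ut) in *. set (X2 := seg_int psi ut u) in *. set (X3 := seg_int psi u v) in *.
  set (X4 := seg_int psi v vt) in *. set (X5 := seg_int psi vt p) in *. set (X6 := seg_int psi ut v) in *.
  set (X7 := seg_int psi ut vt) in *.
  replace (X1 + X2 + X3 + (X4 + X5))%C with (X1 + X7 + X5 + (X2 + X3 + - X6) + (X6 + X4 + - X7))%C by C_ring.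
  rewrite Z1, Z2. C_ring.
Qed.

Lemma tri_int_near_except_le u v r B : in_disc a R0 u -> in_disc a R0 v ->
  Cmod (u - p) <= r -> Cmod (v - p) <= r -> (forall x, Cmod (x - p) <= r -> Cmod (psi x) <= B) ->
  Cmod (tri_int psi p u v) <= B * (Cmod (u - p) + Cmod (v - u) + Cmod (p - v)).
Proof.
  intros Hu Hv Du Dv HB. pose proof Hex as [Hp _].
  assert (Dp : Cmod (p - p) <= r).
  { replace (p - p)%C with (RtoC 0) by C_ring. rewrite Cmod_0. pose proof (Cmod_ge_0 (u - p)). lra. }
  assert (SB : forall X Y, in_disc a R0 X -> in_disc a R0 Y -> Cmod (X - p) <= r -> Cmod (Y - p) <= r ->
     Cmod (seg_int psi X Y) <= B * Cmod (Y - X)).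
  { intros X Y HX HY DX DY. apply seg_int_norm_le. eapply holo_except_seg_cont; eauto.
    intros s Hs. apply HB, (Cmod_lerp_le X Y p r s Hs DX DY). }
  unfold tri_int. pose proof (Cmod_triangle (seg_int psi p u + seg_int psi u v) (seg_int psi v p)).
  pose proof (Cmod_triangle (seg_int psi p u) (seg_int psi u v)).
  pose proof (SB p u Hp Hu Dp Du). pose proof (SB u v Hu Hv Du Dv). pose proof (SB v p Hv Hp Dv Dp). lra.
Qed.

Theorem cauchy_tri_except u v : in_disc a R0 u -> in_disc a R0 v -> tri_int psi p u v = 0%C.
Proof.
  intros Hu Hv. destruct (Req_dec (cross2 (u - p) (v - p)) 0) as [Hc|Hc].
  { eapply cauchy_tri_collinear; eauto. }
  pose proof Hex as [Hp [Hcp _]].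
  destruct (Hcp 1 ltac:(lra)) as [dl [Hdl Hcl]].
  set (M := Cmod (u - p) + Cmod (v - p) + 1). set (B := Cmod (psi p) + 1).
  pose proof (Cmod_ge_0 (u - p)). pose proof (Cmod_ge_0 (v - p)). pose proof (Cmod_ge_0 (psi p)).
  assert (HM : 1 <= M) by (unfold M; lra). assert (HB : 1 <= B) by (unfold B; lra).
  apply Cmod_eq_0, Rle_antisym; [|apply Cmod_ge_0].
  apply le_epsilon. intros eps He.
  set (t := Rmin (1/2) (Rmin (dl / (2 * M)) (eps / (2 * B * M + 1)))).
  assert (Ht1 : t <= 1/2) by apply Rmin_l.
  assert (Ht2 : t <= dl / (2 * M)) by (eapply Rle_trans; [apply Rmin_r|apply Rmin_l]).
  assert (Ht3 : t <= eps / (2 * B * M + 1)) by (eapply Rle_trans; [apply Rmin_r|apply Rmin_r]).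
  assert (Ht0 : 0 < t) by (unfold t; repeat apply Rmin_glb_lt; try lra; apply Rdiv_lt_0_compat; nra).
  assert (HtM : t * M < dl).
  { apply Rle_lt_trans with (dl / (2 * M) * M). apply Rmult_le_compat_r; lra.
    replace (dl / (2 * M) * M) with (dl / 2) by (field; lra). lra. }
  assert (Hscale : forall X, Cmod (p + RtoC t * (X - p) - p) = t * Cmod (X - p)).
  { intros X. replace (p + RtoC t * (X - p) - p)%C with (RtoC t * (X - p))%C by C_ring.
    rewrite Cmod_mult, Cmod_R, Rabs_right; lra. }
  rewrite (tri_int_shrink u v t Hu Hv Hc ltac:(lra)).
  eapply Rle_trans.
  { apply (tri_int_near_except_le _ _ (t * M) B); try apply in_disc_lerp; auto; try lra.
    - rewrite Hscale. apply Rmult_le_compat_l; unfold M; lra.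
    - rewrite Hscale. apply Rmult_le_compat_l; unfold M; lra.
    - intros x Hx. specialize (Hcl x ltac:(lra)).
      replace (psi x) with ((psi x - psi p) + psi p)%C by C_ring.
      eapply Rle_trans. apply Cmod_triangle. unfold B. lra. }
  replace (p + RtoC t * (v - p) - (p + RtoC t * (u - p)))%C with (RtoC t * ((v - p) - (u - p)))%C by C_ring.
  replace (p - (p + RtoC t * (v - p)))%C with (- (RtoC t * (v - p)))%C by C_ring.
  rewrite Hscale, Cmod_opp, !Cmod_mult, Cmod_R, Rabs_right by lra.
  pose proof (Cmod_triangle (v - p) (- (u - p))). rewrite Cmod_opp in H2.
  replace ((v - p) + - (u - p))%C with ((v - p) - (u - p))%C in H2 by C_ring.
  apply Rle_trans with (B * (t * (2 * M))).
  { apply Rmult_le_compat_l. lra. unfold M; nra. }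
  assert (t * (2 * B * M + 1) <= eps).
  { apply Rle_trans with (eps / (2 * B * M + 1) * (2 * B * M + 1)). apply Rmult_le_compat_r; nra.
    right; field; nra. }
  nra.
Qed.

End CauchyExcept.

Lemma primitive_derive psi a R0 p z : holo_except psi a R0 p -> in_disc a R0 z ->
  is_Cderive (fun w => seg_int psi p w) z (psi z).
Proof.
  intros H Hz. pose proof H as [Hp [Hcp Hd]]. apply is_Cderive_of_approx. intros eps He.
  destruct (holo_except_cont_at psi a R0 p z H Hz eps He) as [d1 [Hd1 Hc1]].
  exists (Rmin d1 (R0 - Cmod (z - a))). split. apply Rmin_glb_lt; auto. unfold in_disc in Hz; lra.
  intros w Hw. pose proof (Rmin_l d1 (R0 - Cmod (z - a))). pose proof (Rmin_r d1 (R0 - Cmod (z - a))).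
  assert (Iw : in_disc a R0 w).
  { unfold in_disc. replace (w - a)%C with ((w - z) + (z - a))%C by C_ring. eapply Rle_lt_trans. apply Cmod_triangle. lra. }
  assert (V := cauchy_tri_except psi a R0 p H z w Hz Iw). unfold tri_int in V.
  rewrite (seg_int_rev psi p w) in V by (eapply holo_except_seg_cont; eauto).
  assert (E : (seg_int psi p w - seg_int psi p z - psi z * (w - z))%C = seg_int (fun x => psi x - (psi z + RtoC 0 * x))%C z w).
  { rewrite seg_int_minus. rewrite seg_int_affine.
    transitivity (seg_int psi p z + seg_int psi z w + - seg_int psi p w + (seg_int psi p w - seg_int psi p z - psi z * (w - z)))%C. rewrite V; C_ring. C_ring.
    eapply holo_except_seg_cont; eauto. intros t _. exact (is_Cderive_cont_at _ _ _ (is_Cderive_affine _ _ _)). }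
  rewrite E. apply seg_int_norm_le.
  - intros t Ht. apply C_cont_at_minus. eapply holo_except_cont_at; eauto. apply in_disc_lerp; auto. exact (is_Cderive_cont_at _ _ _ (is_Cderive_affine _ _ _)).
  - intros t Ht. replace (psi (z + RtoC t * (w - z)) - (psi z + RtoC 0 * (z + RtoC t * (w - z))))%C with (psi (z + RtoC t * (w - z)) - psi z)%C by C_ring.
    left. apply Hc1. replace (z + RtoC t * (w - z) - z)%C with (RtoC t * (w - z))%C by C_ring.
    rewrite Cmod_mult, Cmod_R, Rabs_right by lra. pose proof (Cmod_ge_0 (w - z)%C). nra.
Qed.

Definition expi (t : R) : C := (cos t, sin t).
Definition circ (a : C) (r t : R) : C := (a + RtoC r * expi t)%C.

Lemma Cmod_expi t : Cmod (expi t) = 1.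
Proof. unfold Cmod, expi. simpl fst; simpl snd. rewrite <- sqrt_1. f_equal. rewrite <- (sin2_cos2 t). unfold Rsqr. ring. Qed.

Lemma is_RCderive_circ a r t : is_RCderive (circ a r) t (RtoC r * (Ci * expi t))%C.
Proof.
  unfold is_RCderive, circ.
  assert (D1 : is_derive (fun s => r * cos s) t (- r * sin t)) by (auto_derive; auto; ring).
  assert (D2 : is_derive (fun s => r * sin s) t (r * cos t)) by (auto_derive; auto; ring).
  pose proof (is_derive_scal_l (K:=R_AbsRing) (V:=C_R_NormedModule) _ t _ (RtoC 1) D1) as E1.
  pose proof (is_derive_scal_l (K:=R_AbsRing) (V:=C_R_NormedModule) _ t _ Ci D2) as E2.
  pose proof (is_derive_plus (K:=R_AbsRing) (V:=C_R_NormedModule) _ _ t _ _ E1 E2) as E3.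
  pose proof (is_derive_plus (K:=R_AbsRing) (V:=C_R_NormedModule) _ _ t _ _ (is_derive_const (K:=R_AbsRing) (V:=C_R_NormedModule) a t) E3) as E4.
  replace (RtoC r * (Ci * expi t))%C with (@plus C_R_NormedModule zero (plus (scal (- r * sin t) (RtoC 1)) (scal (r * cos t) Ci))).
  eapply is_derive_ext. 2: exact E4. intros s. simpl. rewrite !scal_R_Cmult. change (Cplus a (Cplus (RtoC (r * cos s) * RtoC 1) (RtoC (r * sin s) * Ci)) = (a + RtoC r * expi s)%C). unfold expi. C_ring.
  rewrite !scal_R_Cmult. unfold expi. change (Cplus (RtoC 0) (Cplus (RtoC (- r * sin t) * RtoC 1) (RtoC (r * cos t) * Ci)) = (RtoC r * (Ci * (cos t, sin t)))%C). C_ring.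
Qed.

Lemma expi_2PI : expi (2 * PI) = expi 0.
Proof. unfold expi. rewrite cos_2PI, sin_2PI, cos_0, sin_0. reflexivity. Qed.

Lemma in_disc_circ a R0 r t : 0 <= r < R0 -> in_disc a R0 (circ a r t).
Proof.
  intros Hr. unfold in_disc, circ. replace (a + RtoC r * expi t - a)%C with (RtoC r * expi t)%C by C_ring.
  rewrite Cmod_mult, Cmod_expi, Cmod_R, Rabs_right; lra.
Qed.

Lemma RC_cont_at_circ_deriv r : forall t, RC_cont_at (fun s => RtoC r * (Ci * expi s))%C t.
Proof.
  intros t. apply RC_cont_at_ext with (g := fun s => (circ 0 r s * Ci)%C).
  intros s. unfold circ. C_ring. apply RC_cont_at_mult. eapply is_RCderive_cont_at. apply is_RCderive_circ. apply RC_cont_at_const.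
Qed.

Lemma cauchy_circle_except psi a R0 p r : holo_except psi a R0 p -> 0 < r < R0 ->
  is_CInt (fun t => psi (circ a r t) * (RtoC r * (Ci * expi t)))%C 0 (2 * PI) (RtoC 0).
Proof.
  intros H Hr.
  set (f := fun t => seg_int psi p (circ a r t)).
  assert (Hder : forall t, is_RCderive f t (psi (circ a r t) * (RtoC r * (Ci * expi t)))%C).
  { intros t. apply (is_RCderive_comp (fun w => seg_int psi p w) (circ a r)). apply (primitive_derive psi a R0 p). auto.
    apply in_disc_circ; lra. apply is_RCderive_circ. }
  assert (FC : forall t, RC_cont_at (fun t => psi (circ a r t) * (RtoC r * (Ci * expi t)))%C t).
  { intros t. apply RC_cont_at_mult. apply (RC_cont_at_comp (circ a r) psi). eapply is_RCderive_cont_at; apply is_RCderive_circ.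
    apply (holo_except_cont_at psi a R0 p); auto. apply in_disc_circ; lra. apply RC_cont_at_circ_deriv. }
  pose proof (is_RInt_derive (V:=C_R_CompleteNormedModule) f _ 0 (2 * PI) (fun t _ => Hder t) (fun t _ => RC_cont_at_continuous _ t (FC t))) as K.
  unfold f in K. unfold circ in K. rewrite expi_2PI in K.
  replace (RtoC 0) with (@minus C_R_NormedModule (seg_int psi p (a + RtoC r * expi 0)) (seg_int psi p (a + RtoC r * expi 0))).
  exact K. change (Cplus (seg_int psi p (a + RtoC r * expi 0)) (Copp (seg_int psi p (a + RtoC r * expi 0))) = RtoC 0). C_ring.
Qed.

Lemma expi_add s t : (expi s * expi t)%C = expi (s + t).
Proof. unfold expi. rewrite cos_plus, sin_plus. apply C_ext; simpl; ring. Qed.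

Lemma expi_pow t n : Cpow (expi t) n = expi (INR n * t).
Proof.
  induction n. simpl. unfold expi. rewrite Rmult_0_l, cos_0, sin_0. reflexivity.
  rewrite Cpow_S, IHn, expi_add. f_equal. rewrite S_INR. ring.
Qed.

Lemma is_RCderive_expi_scal c t : is_RCderive (fun s => expi (c * s)) t (RtoC c * Ci * expi (c * t))%C.
Proof.
  pose proof (is_derive_comp (K:=R_AbsRing) (V:=C_R_NormedModule) (circ 0 1) (fun s => c * s) t _ c
    (is_RCderive_circ 0 1 (c * t)) ltac:(auto_derive; auto; ring)) as F.
  replace (RtoC c * Ci * expi (c * t))%C with (@scal R_AbsRing C_R_NormedModule c (RtoC 1 * (Ci * expi (c * t)))%C)
    by (rewrite scal_R_Cmult; C_ring).
  eapply is_derive_ext; [|exact F]. intros s. simpl. unfold circ. C_ring.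
Qed.

Lemma expi_period k : expi (- INR k * (2 * PI)) = expi 0.
Proof.
  unfold expi. replace (- INR k * (2 * PI)) with (- (0 + 2 * INR k * PI)) by ring.
  rewrite cos_neg, sin_neg, cos_period, sin_period, cos_0, sin_0. f_equal. ring.
Qed.

Lemma is_CInt_expi k : (1 <= k)%nat -> is_CInt (fun t => expi (- INR k * t)) 0 (2 * PI) (RtoC 0).
Proof.
  intros Hk. set (c := - INR k).
  assert (Hc : c <> 0). { unfold c. apply Ropp_neq_0_compat. apply not_0_INR. lia. }
  assert (HcC : (RtoC c * Ci)%C <> RtoC 0). { apply Cmult_neq_0. intros E. apply Hc. apply (f_equal fst) in E. exact E. exact Ci_nz. }
  set (G := fun t => (expi (c * t) * / (RtoC c * Ci))%C).
  assert (GD : forall t, is_RCderive G t (expi (c * t))).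
  { intros t. pose proof (is_RCderive_mult_const _ t _ (/ (RtoC c * Ci))%C (is_RCderive_expi_scal c t)) as E.
    replace (expi (c * t)) with (RtoC c * Ci * expi (c * t) * / (RtoC c * Ci))%C. exact E. field. split; [exact Ci_nz | intros E0; apply Hc; apply (f_equal fst) in E0; exact E0]. }
  assert (GC : forall t, RC_cont_at (fun t => expi (c * t)) t) by (intros t; eapply is_RCderive_cont_at; apply is_RCderive_expi_scal).
  pose proof (is_RInt_derive (V:=C_R_CompleteNormedModule) G _ 0 (2 * PI) (fun t _ => GD t) (fun t _ => RC_cont_at_continuous _ t (GC t))) as K.
  replace (RtoC 0) with (@minus C_R_NormedModule (G (2 * PI)) (G 0)). exact K.
  unfold G. unfold c. rewrite expi_period. rewrite Rmult_0_r.
  change (Cplus (expi 0 * / (RtoC (- INR k) * Ci)) (Copp (expi 0 * / (RtoC (- INR k) * Ci))) = RtoC 0)%C. C_ring.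
Qed.

Fixpoint geom_sum (x : C) (n : nat) : C := match n with O => RtoC 0 | S m => (geom_sum x m + Cpow x m)%C end.

Lemma geom_sum_id x n : ((RtoC 1 - x) * geom_sum x n)%C = (RtoC 1 - Cpow x n)%C.
Proof.
  induction n. simpl. C_ring. simpl geom_sum. rewrite Cpow_S.
  replace ((RtoC 1 - x) * (geom_sum x n + Cpow x n))%C with ((RtoC 1 - x) * geom_sum x n + (RtoC 1 - x) * Cpow x n)%C by C_ring.
  rewrite IHn. C_ring.
Qed.

Lemma is_CInt_geom_sum q n : is_CInt (fun t => geom_sum (q * expi (- t)) (S n))%C 0 (2 * PI) (RtoC (2 * PI)).
Proof.
  induction n.
  - replace (RtoC (2 * PI)) with (RtoC (2 * PI - 0) * RtoC 1)%C by C_ring.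
    eapply is_CInt_ext. 2: apply (is_CInt_const 0 (2 * PI) (RtoC 1)). intros; simpl; C_ring.
  - simpl geom_sum. simpl geom_sum in IHn.
    assert (P1 : is_CInt (fun t => Cpow (q * expi (- t)) (S n))%C 0 (2 * PI) (Cpow q (S n) * RtoC 0)%C).
    { eapply is_CInt_ext. 2: apply (is_CInt_mult_l _ _ _ (Cpow q (S n)) _ (is_CInt_expi (S n) ltac:(lia))).
      intros t _. rewrite Cpow_mult_l, expi_pow. f_equal. f_equal. ring. }
    replace (RtoC (2 * PI)) with (RtoC (2 * PI) + Cpow q (S n) * RtoC 0)%C by C_ring.
    pose proof (is_CInt_plus _ _ _ _ _ _ IHn P1) as K. eapply is_CInt_ext. 2: exact K. intros; simpl. C_ring.
Qed.

Lemma Cmod_1_minus (x : C) : 1 - Cmod x <= Cmod (RtoC 1 - x).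
Proof.
  pose proof (Cmod_triangle (RtoC 1 - x) x). replace (RtoC 1 - x + x)%C with (RtoC 1) in H by C_ring.
  rewrite Cmod_1 in H. lra.
Qed.

Lemma circ_minus_neq0 a r lam t : 0 < r -> Cmod (lam - a) < r -> (circ a r t - lam)%C <> RtoC 0.
Proof.
  intros Hr Hl E. assert (Cmod (circ a r t - a) = r).
  { unfold circ. replace (a + RtoC r * expi t - a)%C with (RtoC r * expi t)%C by C_ring. rewrite Cmod_mult, Cmod_expi, Cmod_R, Rabs_right; lra. }
  replace (circ a r t - a)%C with ((circ a r t - lam) + (lam - a))%C in H by C_ring. rewrite E in H.
  replace (RtoC 0 + (lam - a))%C with (lam - a)%C in H by C_ring. lra.
Qed.

Lemma winding_integrand_expand a r lam t n : 0 < r -> Cmod (lam - a) < r ->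
  let x := ((lam - a) / RtoC r * expi (- t))%C in
  (RtoC r * (Ci * expi t) / (circ a r t - lam))%C = (Ci * geom_sum x n + Ci * (Cpow x n / (RtoC 1 - x)))%C.
Proof.
  intros Hr Hl x.
  assert (HrC : RtoC r <> RtoC 0) by (intros E; apply (f_equal fst) in E; simpl in E; lra).
  assert (Hx : Cmod x < 1).
  { unfold x. rewrite Cmod_mult, Cmod_expi, Rmult_1_r, Cmod_div, Cmod_R, Rabs_right by (auto; lra).
    apply Rmult_lt_reg_r with r; auto. unfold Rdiv. rewrite Rmult_assoc, Rinv_l by lra. lra. }
  assert (H1x : (RtoC 1 - x)%C <> RtoC 0).
  { intros E. pose proof (Cmod_1_minus x). rewrite E, Cmod_0 in H. lra. }
  assert (Hinv : (expi t * expi (- t))%C = RtoC 1).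
  { rewrite expi_add. replace (t + - t) with 0 by ring. unfold expi. rewrite cos_0, sin_0. reflexivity. }
  assert (Hnz : expi t <> RtoC 0) by (intros E; pose proof (Cmod_expi t); rewrite E, Cmod_0 in H; lra).
  assert (E : (circ a r t - lam)%C = (RtoC r * expi t * (RtoC 1 - x))%C).
  { unfold circ, x.
    replace (RtoC r * expi t * (RtoC 1 - (lam - a) / RtoC r * expi (- t)))%C
      with (RtoC r * expi t - (lam - a) / RtoC r * RtoC r * (expi t * expi (- t)))%C by C_ring.
    rewrite Hinv. field. auto. }
  assert (G : geom_sum x n = ((RtoC 1 - Cpow x n) / (RtoC 1 - x))%C) by (rewrite <- geom_sum_id; field; auto).
  rewrite E, G. field. repeat split; auto.
Qed.

Lemma RC_cont_at_winding_integrand a r lam t : 0 < r -> Cmod (lam - a) < r ->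
  RC_cont_at (fun t => RtoC r * (Ci * expi t) / (circ a r t - lam))%C t.
Proof.
  intros Hr Hl. apply RC_cont_at_mult. apply RC_cont_at_circ_deriv.
  apply RC_cont_at_inv; [|apply circ_minus_neq0; auto].
  apply (RC_cont_at_comp (circ a r) (fun w => w - lam)%C). eapply is_RCderive_cont_at; apply is_RCderive_circ.
  apply (is_Cderive_cont_at _ _ (RtoC 1)). eapply is_Cderive_ext_loc with (d := 1); [lra| |apply (is_Cderive_affine (- lam) (RtoC 1))].
  intros w _. simpl. C_ring.
Qed.

Lemma winding_circle a r lam : 0 < r -> Cmod (lam - a) < r ->
  is_CInt (fun t => RtoC r * (Ci * expi t) / (circ a r t - lam))%C 0 (2 * PI) (RtoC (2 * PI) * Ci)%C.
Proof.
  intros Hr Hl. pose proof PI_RGT_0.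
  set (q := ((lam - a) / RtoC r)%C).
  assert (Hq : Cmod q < 1).
  { unfold q. rewrite Cmod_div, Cmod_R, Rabs_right by (try lra; intros E; apply (f_equal fst) in E; simpl in E; lra).
    apply Rmult_lt_reg_r with r; auto. unfold Rdiv. rewrite Rmult_assoc, Rinv_l by lra. lra. }
  pose proof (Cmod_ge_0 q).
  pose proof (is_CInt_continuous _ 0 (2 * PI)
    (fun t _ => RC_cont_at_continuous _ t (RC_cont_at_winding_integrand a r lam t Hr Hl))) as K.
  set (J := RInt _ 0 (2 * PI)) in K.
  assert (B : forall n, Cmod (J - RtoC (2 * PI) * Ci) <= 2 * PI * Cmod q / (1 - Cmod q) * Cmod q ^ n).
  { intros n. replace (2 * PI * Cmod q / (1 - Cmod q) * Cmod q ^ n) with (Cmod q ^ S n / (1 - Cmod q) * (2 * PI - 0))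
      by (simpl; field; lra).
    apply (is_CInt_norm_le (fun t => RtoC r * (Ci * expi t) / (circ a r t - lam) - Ci * geom_sum (q * expi (- t)) (S n))%C).
    lra.
    - intros t Ht. rewrite (winding_integrand_expand a r lam t (S n) Hr Hl). fold q.
      set (x := (q * expi (- t))%C).
      replace (Ci * geom_sum x (S n) + Ci * (Cpow x (S n) / (RtoC 1 - x)) - Ci * geom_sum x (S n))%C
        with (Ci * (Cpow x (S n) / (RtoC 1 - x)))%C by C_ring.
      assert (Hx : Cmod x = Cmod q) by (unfold x; rewrite Cmod_mult, Cmod_expi; ring).
      pose proof (Cmod_1_minus x). rewrite Hx in H1.
      rewrite Cmod_mult, Cmod_Ci, Rmult_1_l, Cmod_div, Cmod_pow, Hx
        by (intros E; rewrite E, Cmod_0 in H1; lra).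
      apply Rmult_le_compat_l. apply pow_le; auto. apply Rinv_le_contravar; lra.
    - replace (J - RtoC (2 * PI) * Ci)%C with (J - Ci * RtoC (2 * PI))%C by C_ring.
      apply is_CInt_minus; auto. apply is_CInt_mult_l. apply is_CInt_geom_sum. }
  replace (RtoC (2 * PI) * Ci)%C with J. exact K.
  apply Ceq_minus, Cmod_eq_0, Rle_antisym; [|apply Cmod_ge_0].
  apply (le_0_of_geometric (2 * PI * Cmod q / (1 - Cmod q)) (Cmod q)); [lra | exact B].
Qed.

(** * Cauchy estimates *)

Definition holo_on_disc (f : C -> C) a R0 := forall z, in_disc a R0 z -> exists l, is_Cderive f z l.

Lemma cauchy_formula f a R0 r lam : holo_on_disc f a R0 -> 0 < r < R0 -> Cmod (lam - a) < r ->
  is_CInt (fun t => f (circ a r t) * (RtoC r * (Ci * expi t)) / (circ a r t - lam))%C 0 (2 * PI) (RtoC (2 * PI) * Ci * f lam)%C.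
Proof.
  intros Hf Hr Hl.
  assert (Il : in_disc a R0 lam) by (unfold in_disc; lra).
  destruct (Hf lam Il) as [l0 Hl0].
  set (psi := fun z => if Ceq_dec z lam then l0 else ((f z - f lam) / (z - lam))%C).
  assert (HE : holo_except psi a R0 lam).
  { split; [auto|split].
    - intros eps He. destruct (is_Cderive_approx f lam l0 Hl0 (eps / 2) ltac:(lra)) as [d [Hd K]].
      exists d; split; auto. intros w Hw. unfold psi. destruct (Ceq_dec lam lam) as [_|N]; [|congruence].
      destruct (Ceq_dec w lam) as [->|N].
      + replace (l0 - l0)%C with (RtoC 0) by C_ring. rewrite Cmod_0. lra.
      + assert (Nz : (w - lam)%C <> RtoC 0) by (intros E; apply N; transitivity ((w - lam) + lam)%C; [C_ring|rewrite E; C_ring]).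
        replace ((f w - f lam) / (w - lam) - l0)%C with ((f w - f lam - l0 * (w - lam)) / (w - lam))%C by (field; auto).
        rewrite Cmod_div by auto. specialize (K w Hw). pose proof (Cmod_gt_0 (w - lam)%C) as [G _]. specialize (G Nz).
        apply Rle_lt_trans with (eps / 2). apply Rmult_le_reg_r with (Cmod (w - lam)); auto.
        unfold Rdiv. rewrite Rmult_assoc, Rinv_l by lra. lra. lra.
    - intros z Hz Nz. destruct (Hf z Hz) as [lz Hlz].
      eexists. apply (is_Cderive_ext_loc (fun w => (f w - f lam) * / (w - lam))%C psi z _ (Cmod (z - lam))).
      apply Cmod_gt_0. intros E; apply Nz; transitivity ((z - lam) + lam)%C; [C_ring|rewrite E; C_ring].
      intros w Hw. unfold psi. destruct (Ceq_dec w lam) as [->|N].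
      + replace (z - lam)%C with (- (lam - z))%C in Hw by C_ring. rewrite Cmod_opp in Hw. lra.
      + reflexivity.
      + apply is_Cderive_mult. apply is_Cderive_minus_const. exact Hlz. apply is_Cderive_inv_shift. exact Nz. }
  pose proof (cauchy_circle_except psi a R0 lam r HE Hr) as C1.
  pose proof (is_CInt_mult_l _ _ _ (f lam) _ (winding_circle a r lam ltac:(lra) Hl)) as C2.
  pose proof (is_CInt_plus _ _ _ _ _ _ C1 C2) as C3.
  replace (RtoC (2 * PI) * Ci * f lam)%C with (RtoC 0 + f lam * (RtoC (2 * PI) * Ci))%C by C_ring.
  eapply is_CInt_ext. 2: exact C3. intros t _. simpl.
  pose proof (circ_minus_neq0 a r lam t ltac:(lra) Hl) as Ng.
  unfold psi. destruct (Ceq_dec (circ a r t) lam) as [E|_].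
  - exfalso. apply Ng. rewrite E. C_ring.
  - field. auto.
Qed.

Lemma circle_int_bound F X B : is_CInt F 0 (2 * PI) (RtoC (2 * PI) * Ci * X)%C ->
  (forall t, 0 <= t <= 2 * PI -> Cmod (F t) <= B) -> Cmod X <= B.
Proof.
  intros H HB. pose proof PI_RGT_0. pose proof (is_CInt_norm_le F 0 (2 * PI) _ B ltac:(lra) HB H) as N.
  rewrite !Cmod_mult, Cmod_Ci, Cmod_R, Rabs_right in N by lra. nra.
Qed.

Lemma circ_dist a r mu t : Cmod (circ a r t - mu) >= r - Cmod (mu - a) /\ Cmod (circ a r t - a) = Rabs r.
Proof.
  assert (E : Cmod (circ a r t - a) = Rabs r).
  { unfold circ. replace (a + RtoC r * expi t - a)%C with (RtoC r * expi t)%C by C_ring. rewrite Cmod_mult, Cmod_expi, Cmod_R; ring. }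
  split; auto. pose proof (Cmod_triangle (circ a r t - mu) (mu - a)). replace (circ a r t - mu + (mu - a))%C with (circ a r t - a)%C in H by C_ring.
  pose proof (Rle_abs r). lra.
Qed.

Lemma cauchy_est_diff f a R0 r M mu : holo_on_disc f a R0 -> 0 < r < R0 ->
  (forall t, Cmod (f (circ a r t)) <= M) -> Cmod (mu - a) <= r / 2 ->
  Cmod (f mu - f a) <= 2 * M * Cmod (mu - a) / r.
Proof.
  intros Hf Hr HM Hmu.
  pose proof (cauchy_formula f a R0 r mu Hf Hr ltac:(lra)) as I1.
  pose proof (cauchy_formula f a R0 r a Hf Hr ltac:(replace (a - a)%C with (RtoC 0) by C_ring; rewrite Cmod_0; lra)) as I2.
  pose proof (is_CInt_minus _ _ _ _ _ _ I1 I2) as I3.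
  replace (RtoC (2 * PI) * Ci * f mu - RtoC (2 * PI) * Ci * f a)%C with (RtoC (2 * PI) * Ci * (f mu - f a))%C in I3 by C_ring.
  apply (circle_int_bound _ _ _ I3).
  intros t Ht. 
  pose proof (circ_minus_neq0 a r mu t ltac:(lra) ltac:(lra)) as N1.
  pose proof (circ_minus_neq0 a r a t ltac:(lra) ltac:(replace (a - a)%C with (RtoC 0) by C_ring; rewrite Cmod_0; lra)) as N2.
  replace (f (circ a r t) * (RtoC r * (Ci * expi t)) / (circ a r t - mu) - f (circ a r t) * (RtoC r * (Ci * expi t)) / (circ a r t - a))%C
    with (f (circ a r t) * (RtoC r * (Ci * expi t)) * (mu - a) / ((circ a r t - mu) * (circ a r t - a)))%C by (field; auto).
  destruct (circ_dist a r mu t) as [F1 _]. destruct (circ_dist a r a t) as [_ F2]. rewrite Rabs_right in F2 by lra.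
  unfold Cdiv. rewrite !Cmod_mult, Cmod_inv, Cmod_mult by (apply Cmult_neq_0; auto).
  rewrite Cmod_Ci, Cmod_expi, Cmod_R, Rabs_right by lra. rewrite F2.
  set (A := Cmod (f (circ a r t))). set (D := Cmod (mu - a)). set (G1 := Cmod (circ a r t - mu)).
  assert (HA : A <= M) by apply HM. assert (0 <= A) by apply Cmod_ge_0. assert (0 <= D) by apply Cmod_ge_0.
  assert (HG : r / 2 <= G1) by (unfold G1, D in *; lra).
  replace (A * (r * (1 * 1)) * D * / (G1 * r)) with (A * D / G1) by (field; lra).
  apply Rle_trans with (M * D / (r / 2)).
  - unfold Rdiv. apply Rmult_le_compat. nra. apply Rlt_le, Rinv_0_lt_compat; lra. nra. apply Rinv_le_contravar; lra.
  - right. field. lra.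
Qed.

Lemma cauchy_est_secant f a R0 r M lam mu : holo_on_disc f a R0 -> 0 < r < R0 ->
  (forall t, Cmod (f (circ a r t)) <= M) ->
  Cmod (lam - a) <= r / 2 -> Cmod (mu - a) <= r / 2 -> mu <> a ->
  Cmod (f lam - f a - (lam - a) * ((f mu - f a) / (mu - a))) <= 4 * M * Cmod (lam - a) * Cmod (lam - mu) / (r * r).
Proof.
  intros Hf Hr HM Hl Hmu Nmu.
  assert (Ha : Cmod (a - a) < r) by (replace (a - a)%C with (RtoC 0) by C_ring; rewrite Cmod_0; lra).
  assert (Nma : (mu - a)%C <> RtoC 0) by (intros E; apply Nmu; transitivity ((mu - a) + a)%C; [C_ring|rewrite E; C_ring]).
  pose proof (cauchy_formula f a R0 r lam Hf Hr ltac:(lra)) as I1.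
  pose proof (cauchy_formula f a R0 r a Hf Hr Ha) as I2.
  pose proof (cauchy_formula f a R0 r mu Hf Hr ltac:(lra)) as I3.
  set (c := ((lam - a) / (mu - a))%C).
  pose proof (is_CInt_minus _ _ _ _ _ _ (is_CInt_minus _ _ _ _ _ _ I1 I2) (is_CInt_mult_l _ _ _ c _ (is_CInt_minus _ _ _ _ _ _ I3 I2))) as I4.
  replace (RtoC (2 * PI) * Ci * f lam - RtoC (2 * PI) * Ci * f a - c * (RtoC (2 * PI) * Ci * f mu - RtoC (2 * PI) * Ci * f a))%C
    with (RtoC (2 * PI) * Ci * (f lam - f a - (lam - a) * ((f mu - f a) / (mu - a))))%C in I4 by (unfold c; field; auto).
  apply (circle_int_bound _ _ _ I4).
  intros t Ht.
  pose proof (circ_minus_neq0 a r lam t ltac:(lra) ltac:(lra)) as N1.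
  pose proof (circ_minus_neq0 a r a t ltac:(lra) Ha) as N2.
  pose proof (circ_minus_neq0 a r mu t ltac:(lra) ltac:(lra)) as N3.
  set (g := circ a r t) in *. set (dg := (RtoC r * (Ci * expi t))%C).
  replace (f g * dg / (g - lam) - f g * dg / (g - a) - c * (f g * dg / (g - mu) - f g * dg / (g - a)))%C
    with (f g * dg * ((lam - a) * (lam - mu)) / ((g - a) * (g - lam) * (g - mu)))%C by (unfold c; field; auto).
  destruct (circ_dist a r lam t) as [F1 _]. destruct (circ_dist a r mu t) as [F3 _]. destruct (circ_dist a r a t) as [_ F2].
  rewrite Rabs_right in F2 by lra. fold g in F1, F2, F3.
  unfold Cdiv. rewrite !Cmod_mult, Cmod_inv by (repeat apply Cmult_neq_0; auto). rewrite !Cmod_mult.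
  unfold dg. rewrite !Cmod_mult, Cmod_Ci, Cmod_expi, Cmod_R, Rabs_right by lra. rewrite F2.
  set (A := Cmod (f g)). set (D1 := Cmod (lam - a)). set (D2 := Cmod (lam - mu)).
  set (G1 := Cmod (g - lam)). set (G3 := Cmod (g - mu)).
  assert (HA : A <= M) by apply HM. assert (0 <= A) by apply Cmod_ge_0.
  assert (0 <= D1) by apply Cmod_ge_0. assert (0 <= D2) by apply Cmod_ge_0.
  assert (HG1 : r / 2 <= G1) by (unfold G1, D1 in *; lra). assert (HG3 : r / 2 <= G3) by (unfold G3 in *; lra).
  replace (A * (r * (1 * 1)) * (D1 * D2) * / (r * G1 * G3)) with (A * (D1 * D2) / (G1 * G3)) by (field; lra).
  apply Rle_trans with (M * (D1 * D2) / (r / 2 * (r / 2))).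
  - assert (0 < r / 2 * (r / 2)) by nra. assert (r / 2 * (r / 2) <= G1 * G3) by nra.
    assert (0 <= A * (D1 * D2)) by (apply Rmult_le_pos; nra).
    unfold Rdiv. apply Rmult_le_compat; auto. apply Rlt_le, Rinv_0_lt_compat; nra.
    apply Rmult_le_compat_r; nra. apply Rinv_le_contravar; auto.
  - right. field. lra.
Qed.

Lemma secant_near_derive f a l r eps : is_Cderive f a l -> 0 < r -> 0 < eps ->
  exists mu, mu <> a /\ Cmod (mu - a) <= r /\ Cmod (mu - a) <= eps /\ Cmod ((f mu - f a) / (mu - a) - l) <= eps.
Proof.
  intros Hl Hr He. destruct (is_Cderive_approx f a l Hl eps He) as [d [Hd K]].
  set (eta := Rmin (d / 2) (Rmin r eps)).
  assert (He1 : eta <= d / 2) by apply Rmin_l.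
  assert (He2 : eta <= r) by (eapply Rle_trans; [apply Rmin_r|apply Rmin_l]).
  assert (He3 : eta <= eps) by (eapply Rle_trans; [apply Rmin_r|apply Rmin_r]).
  assert (He0 : 0 < eta) by (unfold eta; repeat apply Rmin_glb_lt; lra).
  assert (Em : Cmod (a + RtoC eta - a) = eta)
    by (replace (a + RtoC eta - a)%C with (RtoC eta) by C_ring; rewrite Cmod_R, Rabs_right; lra).
  assert (Nz : (a + RtoC eta - a)%C <> RtoC 0) by (intros E; rewrite E, Cmod_0 in Em; lra).
  exists (a + RtoC eta)%C. repeat split; try lra.
  - intros E. rewrite E in Em. replace (a - a)%C with (RtoC 0) in Em by C_ring. rewrite Cmod_0 in Em. lra.
  - replace ((f (a + RtoC eta) - f a) / (a + RtoC eta - a) - l)%C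
      with ((f (a + RtoC eta) - f a - l * (a + RtoC eta - a)) / (a + RtoC eta - a))%C by (field; auto).
    rewrite Cmod_div, Em by auto. specialize (K (a + RtoC eta)%C ltac:(lra)). rewrite Em in K.
    apply Rmult_le_reg_r with eta; auto. unfold Rdiv. rewrite Rmult_assoc, Rinv_l by lra. lra.
Qed.

Lemma cauchy_est_taylor f a R0 r M l lam : holo_on_disc f a R0 -> 0 < r < R0 ->
  (forall t, Cmod (f (circ a r t)) <= M) -> is_Cderive f a l -> Cmod (lam - a) <= r / 2 ->
  Cmod (f lam - f a - l * (lam - a)) <= 4 * M * Cmod (lam - a) ^ 2 / r ^ 2.
Proof.
  intros Hf Hr HM Hl Hlam.
  assert (M0 : 0 <= M) by (pose proof (HM 0); pose proof (Cmod_ge_0 (f (circ a r 0))); lra).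
  set (D := Cmod (lam - a)). assert (HD : 0 <= D) by apply Cmod_ge_0.
  assert (Hrr : 0 < r ^ 2) by (apply pow_lt; lra).
  set (A := 4 * M * D / r ^ 2). assert (HA : 0 <= A) by (unfold A; apply Rdiv_le_0_compat; nra).
  apply le_epsilon. intros eps He.
  set (S := A + D + 1).
  destruct (secant_near_derive f a l (r / 2) (eps / S) Hl ltac:(lra) ltac:(apply Rdiv_lt_0_compat; unfold S; lra))
    as [mu [Nmu [H1 [H2 H3]]]].
  pose proof (cauchy_est_secant f a R0 r M lam mu Hf Hr HM Hlam H1 Nmu) as T.
  set (Q := ((f mu - f a) / (mu - a))%C) in *.
  replace (f lam - f a - l * (lam - a))%C with ((f lam - f a - (lam - a) * Q) + (lam - a) * (Q - l))%C by C_ring.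
  eapply Rle_trans. apply Cmod_triangle. rewrite Cmod_mult. fold D in T |- *.
  assert (Cmod (lam - mu) <= D + eps / S).
  { replace (lam - mu)%C with ((lam - a) + - (mu - a))%C by C_ring.
    eapply Rle_trans. apply Cmod_triangle. rewrite Cmod_opp. fold D; lra. }
  assert (4 * M * D * Cmod (lam - mu) / (r * r) <= A * D + A * (eps / S)).
  { replace (r * r) with (r ^ 2) by ring. unfold A, Rdiv. rewrite <- Rmult_plus_distr_l.
    replace (4 * M * D * Cmod (lam - mu) * / r ^ 2) with (4 * M * D * / r ^ 2 * Cmod (lam - mu)) by ring.
    apply Rmult_le_compat_l. apply Rmult_le_pos; [nra|apply Rlt_le, Rinv_0_lt_compat; lra]. lra. }
  assert (D * Cmod (Q - l) <= D * (eps / S)) by (apply Rmult_le_compat_l; auto).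
  assert ((A + D) * (eps / S) <= eps).
  { apply Rle_trans with (S * (eps / S)). apply Rmult_le_compat_r. apply Rlt_le, Rdiv_lt_0_compat; unfold S; lra.
    unfold S; lra. right; field; unfold S; lra. }
  replace (4 * M * D ^ 2 / r ^ 2) with (A * D) by (unfold A; field; lra). nra.
Qed.

Lemma cauchy_est_derive f a R0 r M l : holo_on_disc f a R0 -> 0 < r < R0 ->
  (forall t, Cmod (f (circ a r t)) <= M) -> is_Cderive f a l -> Cmod l <= 2 * M / r.
Proof.
  intros Hf Hr HM Hl. apply le_epsilon. intros eps He.
  destruct (secant_near_derive f a l (r / 2) eps Hl ltac:(lra) He) as [mu [Nmu [H1 [H2 H3]]]].
  pose proof (cauchy_est_diff f a R0 r M mu Hf Hr HM H1) as T.
  assert (Nz : (mu - a)%C <> RtoC 0) by (intros E; apply Nmu; transitivity ((mu - a) + a)%C; [C_ring|rewrite E; C_ring]).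
  assert (Cmod ((f mu - f a) / (mu - a)) <= 2 * M / r).
  { rewrite Cmod_div by auto. pose proof (Cmod_gt_0 (mu - a)%C) as [G _]. specialize (G Nz).
    apply Rmult_le_reg_r with (Cmod (mu - a)); auto. unfold Rdiv at 1. rewrite Rmult_assoc, Rinv_l by lra.
    replace (2 * M / r * Cmod (mu - a)) with (2 * M * Cmod (mu - a) / r) by (field; lra). lra. }
  replace l with ((f mu - f a) / (mu - a) - ((f mu - f a) / (mu - a) - l))%C by C_ring.
  eapply Rle_trans. apply Cmod_triangle. rewrite Cmod_opp. lra.
Qed.

Lemma holo_derive_bound f c m G l : 0 < m -> holo_on_disc f c m ->
  (forall z, in_disc c m z -> Cmod (f z) <= G) -> is_Cderive f c l -> Cmod l <= 4 * G / m.
Proof.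
  intros Hm Hf HG Hl. replace (4 * G / m) with (2 * G / (m / 2)) by (field; lra).
  apply (cauchy_est_derive f c m (m / 2) G l Hf ltac:(lra)); auto.
  intros t. apply HG, in_disc_circ. lra.
Qed.

(** * Functions of two complex variables *)

Definition C2 := prod_NormedModule C_AbsRing C_NormedModule C_NormedModule.
Definition is_C2diff (g : C * C -> C) (z : C * C) (L : C * C -> C) :=
  @filterdiff C_AbsRing C2 C_NormedModule g (@locally (prod_UniformSpace C_UniformSpace C_UniformSpace) z) L.
Definition cline (p d : C * C) (lam : C) : C * C := ((fst p + lam * fst d)%C, (snd p + lam * snd d)%C).

Lemma filterdiff_cline p d lam0 : @filterdiff C_AbsRing (AbsRing_NormedModule C_AbsRing) C2 (cline p d) (locally lam0) (fun y => @scal C_AbsRing C2 y d).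
Proof.
  pose proof (is_derive_scal_l (K:=C_AbsRing) (V:=C2) (fun x => x) lam0 one d (is_derive_id lam0)) as D1.
  pose proof (is_derive_plus (K:=C_AbsRing) (V:=C2) _ _ lam0 _ _ (is_derive_const (K:=C_AbsRing) (V:=C2) p lam0) D1) as D2.
  unfold is_derive in D2. eapply filterdiff_ext_lin. eapply filterdiff_ext. 2: exact D2.
  intros y. destruct p as [p1 p2], d as [d1 d2]. unfold cline. simpl. reflexivity.
  intros y. destruct d as [d1 d2]. apply injective_projections; simpl; unfold prod_scal, prod_plus, prod_zero; simpl;
  unfold scal, plus, zero, mult, one; simpl; unfold mult; simpl; C_ring.
Qed.

Lemma is_Cderive_cline g p d lam0 L : is_C2diff g (cline p d lam0) L ->
  is_Cderive (fun lam => g (cline p d lam)) lam0 (L d).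
Proof.
  intros H. pose proof (filterdiff_comp' (K:=C_AbsRing) (U:=AbsRing_NormedModule C_AbsRing) (V:=C2) (W:=C_NormedModule)
    (cline p d) g lam0 _ L (filterdiff_cline p d lam0) H) as K.
  unfold is_Cderive, is_derive. eapply filterdiff_ext_lin. exact K.
  intros y. simpl. rewrite (linear_scal L (proj1 H)). reflexivity.
Qed.

Lemma linear_C2_decomp L d : @is_linear C_AbsRing C2 C_NormedModule L ->
  L d = (fst d * L (RtoC 1, RtoC 0) + snd d * L (RtoC 0, RtoC 1))%C.
Proof.
  intros H.
  assert (E : d = @plus C2 (@scal C_AbsRing C2 (fst d) (RtoC 1, RtoC 0)) (@scal C_AbsRing C2 (snd d) (RtoC 0, RtoC 1))).
  { destruct d as [d1 d2]. apply injective_projections; simpl; unfold prod_scal, prod_plus; simpl;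
    unfold scal, plus, mult; simpl; unfold mult; simpl; C_ring. }
  rewrite E at 1. rewrite (linear_plus L H), !(linear_scal L H). simpl. unfold scal, plus, mult; simpl; unfold mult; simpl.
  destruct d; simpl. reflexivity.
Qed.

Lemma is_Cderive_slice0 g w L : is_C2diff g w L ->
  is_Cderive (fun lam => g (lam, snd w)) (fst w) (L (RtoC 1, RtoC 0)).
Proof.
  intros H. assert (E : cline (RtoC 0, snd w) (RtoC 1, RtoC 0) (fst w) = w).
  { destruct w; unfold cline; simpl. f_equal; C_ring. }
  rewrite <- E in H. pose proof (is_Cderive_cline g _ _ _ _ H) as K.
  apply (is_Cderive_ext_loc (fun lam => g (cline (RtoC 0, snd w) (RtoC 1, RtoC 0) lam)) _ _ _ 1 ltac:(lra)); auto.
  intros x _. unfold cline; simpl. f_equal. f_equal; C_ring.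
Qed.

Lemma is_Cderive_slice1 g w L : is_C2diff g w L ->
  is_Cderive (fun lam => g (fst w, lam)) (snd w) (L (RtoC 0, RtoC 1)).
Proof.
  intros H. assert (E : cline (fst w, RtoC 0) (RtoC 0, RtoC 1) (snd w) = w).
  { destruct w; unfold cline; simpl. f_equal; C_ring. }
  rewrite <- E in H. pose proof (is_Cderive_cline g _ _ _ _ H) as K.
  apply (is_Cderive_ext_loc (fun lam => g (cline (fst w, RtoC 0) (RtoC 0, RtoC 1) lam)) _ _ _ 1 ltac:(lra)); auto.
  intros x _. unfold cline; simpl. f_equal. f_equal; C_ring.
Qed.

Lemma pd0_eq g w L : is_C2diff g w L -> pd0 g w = L (RtoC 1, RtoC 0).
Proof.
  intros H. pose proof (is_Cderive_slice0 g w L H) as K. unfold pd0.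
  assert (Ex : exists l, is_derive (K:=C_AbsRing) (V:=C_NormedModule) (fun w0 => g (w0, snd w)) (fst w) l) by (eexists; exact K).
  pose proof (epsilon_spec (inhabits (RtoC 0)) _ Ex) as E.
  exact (is_Cderive_unique _ _ _ _ E K).
Qed.

Lemma pd1_eq g w L : is_C2diff g w L -> pd1 g w = L (RtoC 0, RtoC 1).
Proof.
  intros H. pose proof (is_Cderive_slice1 g w L H) as K. unfold pd1.
  assert (Ex : exists l, is_derive (K:=C_AbsRing) (V:=C_NormedModule) (fun w0 => g (fst w, w0)) (snd w) l) by (eexists; exact K).
  pose proof (epsilon_spec (inhabits (RtoC 0)) _ Ex) as E.
  exact (is_Cderive_unique _ _ _ _ E K).
Qed.

Lemma is_C2diff_apply g w L d : is_C2diff g w L -> L d = (fst d * pd0 g w + snd d * pd1 g w)%C.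
Proof. intros H. rewrite (pd0_eq g w L H), (pd1_eq g w L H). exact (linear_C2_decomp L d (proj1 H)). Qed.

(** * The analytic extensions *)

Lemma IZR_pos_INR p : IZR (Zpos p) = INR (Pos.to_nat p).
Proof. rewrite INR_IZR_INZ. f_equal. lia. Qed.

Lemma periodic_rep {X : Type} (F : R -> X) T : 0 < T -> (forall x, F (x + T) = F x) ->
  forall x, exists y, 0 <= y <= T /\ F y = F x.
Proof.
  intros HT HF.
  assert (Pn : forall n x, F (x + INR n * T) = F x).
  { induction n; intros x. simpl. rewrite Rmult_0_l, Rplus_0_r. auto.
    rewrite S_INR. replace (x + (INR n + 1) * T) with ((x + INR n * T) + T) by ring. rewrite HF. auto. }
  assert (Mn : forall n x, F (x - INR n * T) = F x).
  { intros n x. rewrite <- (Pn n (x - INR n * T)). f_equal. ring. }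
  assert (Zk : forall k x, F (x - IZR k * T) = F x).
  { intros k x. destruct k.
    - simpl. rewrite Rmult_0_l, Rminus_0_r. auto.
    - rewrite IZR_pos_INR. apply Mn.
    - rewrite IZR_NEG, IZR_pos_INR. replace (x - - INR (Pos.to_nat p) * T) with (x + INR (Pos.to_nat p) * T) by ring. apply Pn. }
  intros x. set (k := Int_part (x / T)). destruct (base_Int_part (x / T)) as [B1 B2]. fold k in B1, B2.
  exists (x - IZR k * T). split. 2: apply Zk.
  assert (IZR k * T <= x / T * T) by (apply Rmult_le_compat_r; lra).
  assert (x / T * T = x) by (field; lra).
  assert (x / T * T < (IZR k + 1) * T) by (apply Rmult_lt_compat_r; lra).
  split; nra.
Qed.

(* Points of C² as elements of R⁴, to apply the compactness of boxes [compactness_list]. *)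
Definition toC2 (t : Compactness.Tn 4 R) : C * C :=
  let '(x0, (x1, (x2, (x3, _)))) := t in ((x0, x1), (x2, x3)).
Definition ofC2 (z : C * C) : Compactness.Tn 4 R :=
  (fst (fst z), (snd (fst z), (fst (snd z), (snd (snd z), tt)))).

Lemma ext_cont gr g R0 z : ext_of R0 gr g -> inWcl R0 z -> exists d, 0 < d /\ forall y,
  Rabs (fst (fst y) - fst (fst z)) < d -> Rabs (snd (fst y) - snd (fst z)) < d ->
  Rabs (fst (snd y) - fst (snd z)) < d -> Rabs (snd (snd y) - snd (snd z)) < d -> Cmod (g y - g z) < 1.
Proof.
  intros [[U [HUo [HSU HUd]]] _] Hz.
  pose proof (filterdiff_continuous g z (HUd z (HSU z Hz))) as Hc.
  assert (HP : @locally C_UniformSpace (g z) (fun y => Cmod (y - g z) < 1)) by (apply locally_C_intro; exists 1; split; [lra|auto]).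
  specialize (Hc _ HP). destruct Hc as [d Hd]. exists d. split. apply cond_pos.
  intros y H1 H2 H3 H4. apply Hd. split; split; assumption.
Qed.

Lemma fold_max_ge {T : Type} (f : T -> R) l t : List.In t l -> f t <= List.fold_right Rmax 0 (List.map f l).
Proof. induction l; simpl. tauto. intros [->|H]. apply Rmax_l. eapply Rle_trans. apply IHl; auto. apply Rmax_r. Qed.

Lemma ext_bounded_box gr g R0 : 0 < R0 -> ext_of R0 gr g -> exists G, forall z,
  0 <= fst (fst z) <= 2 * PI -> - R0 <= snd (fst z) <= R0 -> 0 <= fst (snd z) <= 2 * PI -> - R0 <= snd (snd z) <= R0 ->
  Cmod (g z) <= G.
Proof.
  intros HR Hext.
  set (Near := fun (t : Compactness.Tn 4 R) (d : posreal) => forall y,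
    Rabs (fst (fst y) - fst (fst (toC2 t))) < d -> Rabs (snd (fst y) - snd (fst (toC2 t))) < d ->
    Rabs (fst (snd y) - fst (snd (toC2 t))) < d -> Rabs (snd (snd y) - snd (snd (toC2 t))) < d -> Cmod (g y - g (toC2 t)) < 1).
  set (delta := fun t => epsilon (inhabits (mkposreal 1 Rlt_0_1)) (Near t)).
  set (a := (0, (- R0, (0, (- R0, tt)))) : Compactness.Tn 4 R).
  set (b := (2 * PI, (R0, (2 * PI, (R0, tt)))) : Compactness.Tn 4 R).
  assert (Hd : forall t, bounded_n 4 a b t -> Near t (delta t)).
  { intros t Ht. unfold delta. apply epsilon_spec.
    destruct t as [x0 [x1 [x2 [x3 []]]]]. simpl in Ht. destruct Ht as [B0 [B1 [B2 [B3 _]]]].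
    destruct (ext_cont gr g R0 (toC2 (x0, (x1, (x2, (x3, tt)))))) as [d [Hd0 Hd1]]; auto.
    { unfold inWcl, toC2, Im; simpl. split; unfold Rabs; destruct Rcase_abs; lra. }
    exists (mkposreal d Hd0). exact Hd1. }
  apply NNPP. intros Hn. apply (compactness_list 4 a b delta). intros [l Hl]. apply Hn.
  exists (List.fold_right Rmax 0 (List.map (fun t => Cmod (g (toC2 t))) l) + 1).
  intros z Z1 Z2 Z3 Z4. destruct (Hl (ofC2 z)) as [t [Ht1 [Ht2 Ht3]]].
  { unfold ofC2; simpl. destruct Z1, Z2, Z3, Z4. repeat split; auto. }
  pose proof (Hd t Ht2 z) as K. destruct t as [x0 [x1 [x2 [x3 []]]]]. simpl in Ht3.
  destruct Ht3 as [D0 [D1 [D2 [D3 _]]]].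
  specialize (K D0 D1 D2 D3).
  pose proof (fold_max_ge (fun t => Cmod (g (toC2 t))) l _ Ht1) as Mx. simpl in Mx.
  replace (g z) with ((g z - g (toC2 (x0, (x1, (x2, (x3, tt)))))) + g (toC2 (x0, (x1, (x2, (x3, tt))))))%C by C_ring.
  eapply Rle_trans. apply Cmod_triangle. rewrite Rplus_comm. apply Rplus_le_compat. exact Mx. left. exact K.
Qed.

Lemma ext_bounded gr g R0 : 0 < R0 -> ext_of R0 gr g -> exists G, 0 <= G /\ forall z, inWcl R0 z ->
  Cmod (g z) <= G.
Proof.
  intros HR Hext. destruct (ext_bounded_box gr g R0 HR Hext) as [G0 HG0].
  pose proof Hext as [_ [_ Hper]].
  exists (Rmax G0 0). split. apply Rmax_r.
  intros [[a0 b0] [a1 b1]] Hz. unfold inWcl, Im in Hz; simpl in Hz. destruct Hz as [Hb0 Hb1].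
  assert (Iw : forall x y, inWcl R0 ((x, b0), (y, b1))) by (intros; unfold inWcl, Im; simpl; auto).
  assert (PI0 := PI_RGT_0).
  destruct (periodic_rep (fun x => g ((x, b0), (a1, b1))) (2 * PI) ltac:(lra)) with (x := a0) as [y0 [Hy0 E0]].
  { intros x. destruct (Hper _ (Iw x a1)) as [P1 _]. rewrite <- P1. unfold cadd2, rpt. simpl. f_equal. f_equal; apply C_ext; simpl; ring. }
  destruct (periodic_rep (fun x => g ((y0, b0), (x, b1))) (2 * PI) ltac:(lra)) with (x := a1) as [y1 [Hy1 E1]].
  { intros x. destruct (Hper _ (Iw y0 x)) as [_ P2]. rewrite <- P2. unfold cadd2, rpt. simpl. f_equal. f_equal; apply C_ext; simpl; ring. }
  simpl in E0, E1.
  assert (B : Cmod (g ((y0, b0), (y1, b1))) <= G0).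
  { apply HG0; simpl. lra. unfold Rabs in Hb0; destruct Rcase_abs in Hb0; lra. lra. unfold Rabs in Hb1; destruct Rcase_abs in Hb1; lra. }
  rewrite E1, E0 in B. eapply Rle_trans. exact B. apply Rmax_l.
Qed.

Lemma ext_bounded3 gr0 gr1 gr2 g0 g1 g2 R0 : 0 < R0 -> ext_of R0 gr0 g0 -> ext_of R0 gr1 g1 -> ext_of R0 gr2 g2 ->
  exists G, 0 <= G /\ (forall z, inWcl R0 z -> Cmod (g0 z) <= G) /\
    (forall z, inWcl R0 z -> Cmod (g1 z) <= G) /\ (forall z, inWcl R0 z -> Cmod (g2 z) <= G).
Proof.
  intros HR0 E0 E1 E2.
  destruct (ext_bounded gr0 g0 R0 HR0 E0) as [G0 [HG0 B0]].
  destruct (ext_bounded gr1 g1 R0 HR0 E1) as [G1 [HG1 B1]].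
  destruct (ext_bounded gr2 g2 R0 HR0 E2) as [G2 [HG2 B2]].
  exists (G0 + G1 + G2). repeat split; try lra; intros z Hz; [specialize (B0 z Hz)|specialize (B1 z Hz)|specialize (B2 z Hz)]; lra.
Qed.

Lemma ext_diff gr g R0 z : ext_of R0 gr g -> inWcl R0 z -> exists L, is_C2diff g z L.
Proof. intros [[U [HUo [HSU HUd]]] _] Hz. exact (HUd z (HSU z Hz)). Qed.

Lemma inWcl_shift0 R0 bs w0 w1 lam : Rabs (Im w0) < bs -> Rabs (Im w1) <= R0 -> Cmod (lam - w0) < R0 - bs ->
  inWcl R0 (lam, w1).
Proof.
  intros H0 H1 H2. unfold inWcl; simpl. split; auto.
  assert (H : Rabs (Im lam - Im w0) <= Cmod (lam - w0)).
  { replace (Im lam - Im w0) with (snd (lam - w0)%C) by (unfold Im; simpl; ring). apply Cmod_snd_le. }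
  pose proof (Rabs_triang_inv (Im lam) (Im w0)). lra.
Qed.

Lemma inWcl_shift1 R0 bs w0 w1 lam : Rabs (Im w1) < bs -> Rabs (Im w0) <= R0 -> Cmod (lam - w1) < R0 - bs ->
  inWcl R0 (w0, lam).
Proof.
  intros H0 H1 H2. unfold inWcl; simpl. split; auto.
  assert (H : Rabs (Im lam - Im w1) <= Cmod (lam - w1)).
  { replace (Im lam - Im w1) with (snd (lam - w1)%C) by (unfold Im; simpl; ring). apply Cmod_snd_le. }
  pose proof (Rabs_triang_inv (Im lam) (Im w1)). lra.
Qed.

Lemma pd_bound gr g R0 G bs w : 0 < bs < R0 -> ext_of R0 gr g -> (forall z, inWcl R0 z -> Cmod (g z) <= G) ->
  inW bs w -> Cmod (pd0 g w) <= 4 * G / (R0 - bs) /\ Cmod (pd1 g w) <= 4 * G / (R0 - bs).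
Proof.
  intros Hb Hext HG [H0 H1].
  destruct (ext_diff gr g R0 w Hext ltac:(split; lra)) as [L HL].
  split.
  - apply (holo_derive_bound (fun lam => g (lam, snd w)) (fst w) (R0 - bs) G); try lra.
    + intros lam Hl. destruct (ext_diff gr g R0 (lam, snd w) Hext) as [L' HL'].
      { apply (inWcl_shift0 R0 bs (fst w)); [exact H0 | lra | exact Hl]. }
      eexists. exact (is_Cderive_slice0 g (lam, snd w) L' HL').
    + intros lam Hl. apply HG, (inWcl_shift0 R0 bs (fst w)); [exact H0 | lra | exact Hl].
    + rewrite (pd0_eq g w L HL). exact (is_Cderive_slice0 g w L HL).
  - apply (holo_derive_bound (fun lam => g (fst w, lam)) (snd w) (R0 - bs) G); try lra.
    + intros lam Hl. destruct (ext_diff gr g R0 (fst w, lam) Hext) as [L' HL'].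
      { apply (inWcl_shift1 R0 bs _ (snd w)); [exact H1 | lra | exact Hl]. }
      eexists. exact (is_Cderive_slice1 g (fst w, lam) L' HL').
    + intros lam Hl. apply HG, (inWcl_shift1 R0 bs _ (snd w)); [exact H1 | lra | exact Hl].
    + rewrite (pd1_eq g w L HL). exact (is_Cderive_slice1 g w L HL).
Qed.

Lemma ext_shift_period gr g R0 z0 z1 k l : ext_of R0 gr g -> inWcl R0 (z0, z1) -> (k = 0 \/ k = 2 * PI) ->
  (l = 0 \/ l = 2 * PI) ->
  g ((z0 + RtoC k)%C, (z1 + RtoC l)%C) = g (z0, z1).
Proof.
  intros [_ [_ Hper]] Hz Hk Hl.
  assert (E0 : forall a b : C, inWcl R0 (a, b) -> g ((a + RtoC (2 * PI))%C, b) = g (a, b)).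
  { intros a b Hab. destruct (Hper _ Hab) as [Hp _]. rewrite <- Hp. unfold cadd2, rpt. simpl. f_equal. f_equal. C_ring. }
  assert (E1 : forall a b : C, inWcl R0 (a, b) -> g (a, (b + RtoC (2 * PI))%C) = g (a, b)).
  { intros a b Hab. destruct (Hper _ Hab) as [_ Hp]. rewrite <- Hp. unfold cadd2, rpt. simpl. f_equal. f_equal. C_ring. }
  assert (Z0 : forall a : C, (a + RtoC 0)%C = a) by (intros; C_ring).
  assert (I1 : inWcl R0 (z0, (z1 + RtoC l)%C)).
  { unfold inWcl in *; simpl in *. destruct Hz. split; auto. unfold Im in *. simpl. rewrite Rplus_0_r. auto. }
  destruct Hk as [->| ->]; destruct Hl as [->| ->]; rewrite ?Z0.
  - reflexivity.
  - apply E1; auto.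
  - apply E0; auto.
  - rewrite E0 by auto. apply E1; auto.
Qed.

(** * Distance to 2πℤ *)

Lemma dist2piZ_val t : 0 <= t < 2 * PI -> dist2piZ t = Rmin t (2 * PI - t).
Proof.
  intros Ht. unfold dist2piZ. pose proof PI_RGT_0.
  rewrite (is_glb_Rbar_unique _ (Finite (Rmin t (2 * PI - t)))). reflexivity.
  split.
  - intros x [k ->]. simpl. destruct (Z_le_gt_dec k 0) as [Hk|Hk].
    + apply IZR_le in Hk. apply Rle_trans with t. apply Rmin_l.
      rewrite Rabs_right by nra. nra.
    + assert (1 <= IZR k) by (apply IZR_le; lia). apply Rle_trans with (2 * PI - t). apply Rmin_r.
      rewrite Rabs_left1 by nra. nra.
  - intros bb Hb. destruct (Rle_dec t (2 * PI - t)).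
    + rewrite Rmin_left by auto. apply Hb. exists 0%Z. rewrite Rmult_0_r, Rminus_0_r, Rabs_right; lra.
    + rewrite Rmin_right by lra. apply Hb. exists 1%Z. rewrite Rabs_left1; simpl; lra.
Qed.

Definition rep2pi (t : R) := if Rle_dec t PI then t else t - 2 * PI.

Lemma rep2pi_spec t : 0 <= t < 2 * PI -> rep2pi t ^ 2 = dist2piZ t ^ 2 /\
  (t - rep2pi t = 0 \/ t - rep2pi t = 2 * PI) /\ Rabs (rep2pi t) <= PI.
Proof.
  intros Ht. rewrite dist2piZ_val by auto. unfold rep2pi. pose proof PI_RGT_0. destruct (Rle_dec t PI).
  - rewrite Rmin_left by lra. split; [reflexivity|]. split. left; ring. rewrite Rabs_right; lra.
  - rewrite Rmin_right by lra. split. ring. split. right; ring. rewrite Rabs_left1; lra.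
Qed.

Lemma rep2pi_le_zeta t s : inI t -> inI s -> Rabs (rep2pi t) <= zeta t s /\ Rabs (rep2pi s) <= zeta t s.
Proof.
  intros Ht Hs. destruct (rep2pi_spec t Ht) as [E1 _]. destruct (rep2pi_spec s Hs) as [E2 _].
  unfold zeta. rewrite <- E1, <- E2. rewrite <- !sqrt_Rsqr_abs.
  split; apply sqrt_le_1_alt; unfold Rsqr; nra.
Qed.

(** * The chord estimate *)

Lemma Cmod_cross_le (P1 P2 Q1 Q2 : C) D : Cmod P1 <= D -> Cmod P2 <= D -> Cmod Q1 <= D -> Cmod Q2 <= D ->
  Cmod (P1 * Q2 - P2 * Q1) <= 2 * (D * D).
Proof.
  intros. replace (P1 * Q2 - P2 * Q1)%C with (P1 * Q2 + - (P2 * Q1))%C by C_ring.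
  eapply Rle_trans. apply Cmod_triangle. rewrite Cmod_opp, !Cmod_mult.
  pose proof (Cmod_ge_0 P1). pose proof (Cmod_ge_0 P2). pose proof (Cmod_ge_0 Q1). pose proof (Cmod_ge_0 Q2).
  assert (Cmod P1 * Cmod Q2 <= D * D) by (apply Rmult_le_compat; auto).
  assert (Cmod P2 * Cmod Q1 <= D * D) by (apply Rmult_le_compat; auto). lra.
Qed.

Definition norm1_3 (N : C * C * C) : R := let '(n0, n1, n2) := N in Cmod n0 + Cmod n1 + Cmod n2.

Definition normal (g0 g1 g2 : C * C -> C) (w : C * C) : C * C * C :=
  ccross3 (dGam0 g0 g1 g2 w) (dGam1 g0 g1 g2 w).

Definition chord_dot (g0 g1 g2 : C * C -> C) (w d : C * C) (N : C * C * C) (lam : C) : C :=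
  cdot3 (csub3 (Gam g0 g1 g2 (cline w d lam)) (Gam g0 g1 g2 w)) N.

Lemma norm1_3_ge0 N : 0 <= norm1_3 N.
Proof.
  destruct N as [[n0 n1] n2]. unfold norm1_3.
  pose proof (Cmod_ge_0 n0). pose proof (Cmod_ge_0 n1). pose proof (Cmod_ge_0 n2). lra.
Qed.

Lemma cline_1_real w a b : cline w (RtoC a, RtoC b) (RtoC 1) = cadd2 w (rpt a b).
Proof. destruct w. unfold cline, cadd2, rpt. simpl. f_equal; C_ring. Qed.

Lemma cline_0 w d : cline w d (RtoC 0) = w.
Proof. destruct w. unfold cline. simpl. f_equal; C_ring. Qed.

Lemma chord_dot_0 g0 g1 g2 w d N : chord_dot g0 g1 g2 w d N (RtoC 0) = RtoC 0.
Proof. unfold chord_dot. rewrite cline_0. destruct N as [[n0 n1] n2]. unfold cdot3, csub3, Gam. C_ring. Qed.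

Lemma is_Cderive_chord_dot g0 g1 g2 w d N lam L0 L1 L2 :
  is_C2diff g0 (cline w d lam) L0 -> is_C2diff g1 (cline w d lam) L1 -> is_C2diff g2 (cline w d lam) L2 ->
  is_Cderive (chord_dot g0 g1 g2 w d N) lam (cdot3 (L0 d, L1 d, L2 d) N).
Proof.
  destruct N as [[n0 n1] n2]. intros H0 H1 H2. unfold chord_dot, cdot3, csub3, Gam.
  apply is_Cderive_plus. apply is_Cderive_plus.
  all: apply is_Cderive_mult_const; apply is_Cderive_minus_const; apply is_Cderive_cline; auto.
Qed.

(* The derivative at 0 is the triple product (DΓ(w) d)·(∂₀Γ(w) × ∂₁Γ(w)), whose first factor is a
   combination of the other two. *)
Lemma chord_dot_normal_derive0 g0 g1 g2 w d L0 L1 L2 :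
  is_C2diff g0 w L0 -> is_C2diff g1 w L1 -> is_C2diff g2 w L2 ->
  is_Cderive (chord_dot g0 g1 g2 w d (normal g0 g1 g2 w)) (RtoC 0) (RtoC 0).
Proof.
  intros H0 H1 H2.
  replace (RtoC 0) with (cdot3 (L0 d, L1 d, L2 d) (normal g0 g1 g2 w)) at 2.
  - apply is_Cderive_chord_dot; rewrite cline_0; auto.
  - rewrite (is_C2diff_apply g0 w L0 d H0), (is_C2diff_apply g1 w L1 d H1), (is_C2diff_apply g2 w L2 d H2).
    unfold normal, cdot3, ccross3, dGam0, dGam1. C_ring.
Qed.

Lemma chord_dot_bound g0 g1 g2 w d N lam G : Cmod (g0 (cline w d lam)) <= G -> Cmod (g1 (cline w d lam)) <= G ->
  Cmod (g2 (cline w d lam)) <= G -> Cmod (g0 w) <= G -> Cmod (g1 w) <= G -> Cmod (g2 w) <= G ->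
  Cmod (chord_dot g0 g1 g2 w d N lam) <= 2 * G * norm1_3 N.
Proof.
  destruct N as [[n0 n1] n2]. intros. unfold chord_dot, cdot3, csub3, Gam, norm1_3.
  assert (Bj : forall a b N, Cmod a <= G -> Cmod b <= G -> Cmod ((a - b) * N) <= 2 * G * Cmod N).
  { intros a b N Ha Hb. rewrite Cmod_mult. apply Rmult_le_compat_r. apply Cmod_ge_0.
    replace (a - b)%C with (a + - b)%C by C_ring. eapply Rle_trans. apply Cmod_triangle. rewrite Cmod_opp. lra. }
  eapply Rle_trans. apply Cmod_triangle. eapply Rle_trans. apply Rplus_le_compat_r. apply Cmod_triangle.
  pose proof (Bj _ _ n0 H H2). pose proof (Bj _ _ n1 H0 H3). pose proof (Bj _ _ n2 H1 H4). lra.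
Qed.

Lemma inW_inWcl r R0 z : inW r z -> r <= R0 -> inWcl R0 z.
Proof. intros [H0 H1] Hr. split; lra. Qed.

Lemma inW_cadd2_rpt r z t s : inW r z -> inW r (cadd2 z (rpt t s)).
Proof. intros [H0 H1]. unfold inW, cadd2, rpt, Im in *. simpl. rewrite !Rplus_0_r. split; lra. Qed.

Lemma cline_inWcl R0 bs w t' s' Z lam : inW bs w -> Rabs t' <= Z -> Rabs s' <= Z ->
  Z * Cmod lam <= R0 - bs -> inWcl R0 (cline w (RtoC (- t'), RtoC (- s')) lam).
Proof.
  intros [H0 H1] Ht Hs HZ. unfold inWcl, cline, Im in *; simpl.
  pose proof (Cmod_snd_le lam) as Hl. pose proof (Cmod_ge_0 lam).
  assert (Rabs t' * Rabs (snd lam) <= Z * Cmod lam) by (apply Rmult_le_compat; auto; apply Rabs_pos).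
  assert (Rabs s' * Rabs (snd lam) <= Z * Cmod lam) by (apply Rmult_le_compat; auto; apply Rabs_pos).
  split.
  - replace (snd (fst w) + (fst lam * 0 + snd lam * - t')) with (snd (fst w) - snd lam * t') by ring.
    eapply Rle_trans. apply Rabs_triang. rewrite Rabs_Ropp, Rabs_mult. lra.
  - replace (snd (snd w) + (fst lam * 0 + snd lam * - s')) with (snd (snd w) - snd lam * s') by ring.
    eapply Rle_trans. apply Rabs_triang. rewrite Rabs_Ropp, Rabs_mult. lra.
Qed.

Section ChordEstimate.

Variables (gr0 gr1 gr2 : R -> R -> R) (g0 g1 g2 : C * C -> C) (R0 bs G : R).
Hypotheses (E0 : ext_of R0 gr0 g0) (E1 : ext_of R0 gr1 g1) (E2 : ext_of R0 gr2 g2).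
Hypothesis Hbs : 0 < bs < R0.
Hypotheses (HG0 : forall z, inWcl R0 z -> Cmod (g0 z) <= G) (HG1 : forall z, inWcl R0 z -> Cmod (g1 z) <= G)
  (HG2 : forall z, inWcl R0 z -> Cmod (g2 z) <= G).

Lemma normal_norm1_le w : inW bs w -> norm1_3 (normal g0 g1 g2 w) <= 6 * (4 * G / (R0 - bs)) ^ 2.
Proof.
  intros Hw.
  destruct (pd_bound gr0 g0 R0 G bs w Hbs E0 HG0 Hw) as [P0 Q0].
  destruct (pd_bound gr1 g1 R0 G bs w Hbs E1 HG1 Hw) as [P1 Q1].
  destruct (pd_bound gr2 g2 R0 G bs w Hbs E2 HG2 Hw) as [P2 Q2].
  unfold normal, norm1_3, ccross3, dGam0, dGam1.
  pose proof (Cmod_cross_le _ _ _ _ _ P1 P2 Q1 Q2). pose proof (Cmod_cross_le _ _ _ _ _ P2 P0 Q2 Q0).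
  pose proof (Cmod_cross_le _ _ _ _ _ P0 P1 Q0 Q1). simpl. lra.
Qed.

Section Direction.

Variables (w : C * C) (t' s' Z : R).
Hypotheses (Hw : inW bs w) (Ht : Rabs t' <= Z) (Hs : Rabs s' <= Z).

Local Notation d := (RtoC (- t'), RtoC (- s')).

Lemma chord_dot_bound_near N lam : Z * Cmod lam <= R0 - bs ->
  Cmod (chord_dot g0 g1 g2 w d N lam) <= 2 * G * norm1_3 N.
Proof.
  intros Hl. pose proof (cline_inWcl R0 bs w t' s' Z lam Hw Ht Hs Hl).
  assert (Iw : inWcl R0 w) by (destruct Hw; split; lra).
  apply chord_dot_bound; auto.
Qed.

Lemma chord_dot_holo N : 0 < Z -> holo_on_disc (chord_dot g0 g1 g2 w d N) (RtoC 0) ((R0 - bs) / Z).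
Proof.
  intros HZ lam Hl. unfold in_disc in Hl. replace (lam - RtoC 0)%C with lam in Hl by C_ring.
  assert (Il : inWcl R0 (cline w d lam)).
  { apply (cline_inWcl R0 bs w t' s' Z lam Hw Ht Hs).
    apply Rlt_le. replace (R0 - bs) with (Z * ((R0 - bs) / Z)) by (field; lra).
    apply Rmult_lt_compat_l; lra. }
  destruct (ext_diff gr0 g0 R0 _ E0 Il) as [L0 HL0]. destruct (ext_diff gr1 g1 R0 _ E1 Il) as [L1 HL1].
  destruct (ext_diff gr2 g2 R0 _ E2 Il) as [L2 HL2].
  eexists. apply is_Cderive_chord_dot; eauto.
Qed.

Lemma chord_dot_normal_small : 0 < Z <= (R0 - bs) / 4 ->
  Cmod (chord_dot g0 g1 g2 w d (normal g0 g1 g2 w) (RtoC 1))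
    <= 32 * G * norm1_3 (normal g0 g1 g2 w) * Z ^ 2 / (R0 - bs) ^ 2.
Proof.
  intros HZ. set (N := normal g0 g1 g2 w).
  assert (Hr : 0 < (R0 - bs) / (2 * Z) < (R0 - bs) / Z).
  { split. apply Rdiv_lt_0_compat; lra. apply Rmult_lt_reg_r with (2 * Z); [lra|]. field_simplify; lra. }
  assert (Hr2 : 2 <= (R0 - bs) / (2 * Z)).
  { apply Rmult_le_reg_r with (2 * Z); [lra|]. field_simplify; lra. }
  assert (Iw : inWcl R0 w) by (destruct Hw; split; lra).
  destruct (ext_diff gr0 g0 R0 w E0 Iw) as [L0 HL0]. destruct (ext_diff gr1 g1 R0 w E1 Iw) as [L1 HL1].
  destruct (ext_diff gr2 g2 R0 w E2 Iw) as [L2 HL2].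
  pose proof (cauchy_est_taylor _ (RtoC 0) ((R0 - bs) / Z) ((R0 - bs) / (2 * Z)) (2 * G * norm1_3 N)
    (RtoC 0) (RtoC 1) (chord_dot_holo N (proj1 HZ)) Hr) as T.
  rewrite chord_dot_0 in T.
  replace (RtoC 1 - RtoC 0)%C with (RtoC 1) in T by C_ring. rewrite Cmod_1 in T.
  replace (chord_dot g0 g1 g2 w d N (RtoC 1) - RtoC 0 - RtoC 0 * RtoC 1)%C with (chord_dot g0 g1 g2 w d N (RtoC 1)) in T
    by C_ring.
  eapply Rle_trans; [apply T|].
  - intros th. apply chord_dot_bound_near.
    unfold circ. replace (RtoC 0 + RtoC ((R0 - bs) / (2 * Z)) * expi th)%C with (RtoC ((R0 - bs) / (2 * Z)) * expi th)%C
      by C_ring.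
    rewrite Cmod_mult, Cmod_expi, Cmod_R, Rabs_right by lra.
    replace (Z * ((R0 - bs) / (2 * Z) * 1)) with ((R0 - bs) / 2) by (field; lra). lra.
  - exact (chord_dot_normal_derive0 g0 g1 g2 w d L0 L1 L2 HL0 HL1 HL2).
  - lra.
  - right. field. lra.
Qed.

Lemma chord_dot_normal_le : Cmod (chord_dot g0 g1 g2 w d (normal g0 g1 g2 w) (RtoC 1))
  <= 32 * G * norm1_3 (normal g0 g1 g2 w) * Z ^ 2 / (R0 - bs) ^ 2.
Proof.
  assert (Iw : inWcl R0 w) by (destruct Hw; split; lra).
  assert (HN : 0 <= norm1_3 (normal g0 g1 g2 w)) by apply norm1_3_ge0.
  assert (HGp : 0 <= G) by (pose proof (HG0 w Iw); pose proof (Cmod_ge_0 (g0 w)); lra).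
  assert (Hm : 0 < (R0 - bs) ^ 2) by (apply pow_lt; lra).
  pose proof (Rabs_pos t').
  destruct (Rle_lt_dec Z ((R0 - bs) / 4)) as [Zs|Zl]; [destruct (Req_dec Z 0) as [Z0|Z0]|].
  - assert (Ed : cline w d (RtoC 1) = cline w d (RtoC 0)).
    { rewrite cline_0, cline_1_real.
      replace t' with 0 by (apply eq_sym, Rabs_eq_0; lra).
      replace s' with 0 by (apply eq_sym, Rabs_eq_0; pose proof (Rabs_pos s'); lra).
      destruct w. unfold cadd2, rpt. simpl. f_equal; C_ring. }
    replace (chord_dot g0 g1 g2 w d (normal g0 g1 g2 w) (RtoC 1))
      with (chord_dot g0 g1 g2 w d (normal g0 g1 g2 w) (RtoC 0)) by (unfold chord_dot; rewrite Ed; reflexivity).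
    rewrite chord_dot_0, Cmod_0, Z0. right. field. lra.
  - apply chord_dot_normal_small. lra.
  - assert (I1 : inWcl R0 (cline w d (RtoC 1))).
    { rewrite cline_1_real. destruct Hw. unfold inWcl, cadd2, rpt, Im in *. simpl. rewrite !Rplus_0_r. split; lra. }
    eapply Rle_trans. apply chord_dot_bound; auto.
    assert (1 <= 16 * Z ^ 2 / (R0 - bs) ^ 2).
    { apply Rmult_le_reg_r with ((R0 - bs) ^ 2); auto. field_simplify; nra. }
    replace (32 * G * norm1_3 (normal g0 g1 g2 w) * Z ^ 2 / (R0 - bs) ^ 2)
      with (2 * G * norm1_3 (normal g0 g1 g2 w) * (16 * Z ^ 2 / (R0 - bs) ^ 2)) by (field; lra).
    assert (0 <= 2 * G * norm1_3 (normal g0 g1 g2 w)) by nra. nra.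
Qed.

Lemma chord_dot_normal_le_uniform : Cmod (chord_dot g0 g1 g2 w d (normal g0 g1 g2 w) (RtoC 1))
  <= 32 * G * (6 * (4 * G / (R0 - bs)) ^ 2) / (R0 - bs) ^ 2 * Z ^ 2.
Proof.
  eapply Rle_trans; [apply chord_dot_normal_le|].
  assert (HGp : 0 <= G) by (pose proof (HG0 w (inW_inWcl bs R0 w Hw ltac:(lra))); pose proof (Cmod_ge_0 (g0 w)); lra).
  replace (32 * G * norm1_3 (normal g0 g1 g2 w) * Z ^ 2 / (R0 - bs) ^ 2)
    with (32 * G / (R0 - bs) ^ 2 * norm1_3 (normal g0 g1 g2 w) * Z ^ 2) by (field; lra).
  replace (32 * G * (6 * (4 * G / (R0 - bs)) ^ 2) / (R0 - bs) ^ 2)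
    with (32 * G / (R0 - bs) ^ 2 * (6 * (4 * G / (R0 - bs)) ^ 2)) by (field; lra).
  apply Rmult_le_compat_r; [apply pow2_ge_0|].
  apply Rmult_le_compat_l; [apply Rdiv_le_0_compat; [lra|apply pow_lt; lra] | exact (normal_norm1_le w Hw)].
Qed.

End Direction.
End ChordEstimate.

Lemma bstar_bounds b C0 R0 g0 g1 g2 : 0 < b -> b < bmax C0 R0 g0 g1 g2 -> 0 < bstar b C0 R0 g0 g1 g2 < R0 / 2.
Proof.
  intros Hb Hbm. unfold bstar. unfold bmax in *.
  pose proof (Rmin_r (C0 ^ 2 / (sqrt 2 * M0 R0 g0 g1 g2 * M1 R0 g0 g1 g2)) (R0 / 2)). lra.
Qed.

Lemma Gam_shift_period gr0 gr1 gr2 g0 g1 g2 R0 z t s :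
  ext_of R0 gr0 g0 -> ext_of R0 gr1 g1 -> ext_of R0 gr2 g2 -> inWcl R0 z -> inI t -> inI s ->
  Gam g0 g1 g2 (cline (cadd2 z (rpt t s)) (RtoC (- rep2pi t), RtoC (- rep2pi s)) (RtoC 1)) = Gam g0 g1 g2 z.
Proof.
  intros E0 E1 E2 Hz Ht Hs.
  destruct (rep2pi_spec t Ht) as [_ [Kt _]]. destruct (rep2pi_spec s Hs) as [_ [Ks _]].
  rewrite cline_1_real. destruct z as [z0 z1].
  replace (cadd2 (cadd2 (z0, z1) (rpt t s)) (rpt (- rep2pi t) (- rep2pi s)))
    with ((z0 + RtoC (t - rep2pi t))%C, (z1 + RtoC (s - rep2pi s))%C)
    by (unfold cadd2, rpt; simpl; f_equal; C_ring).
  unfold Gam. rewrite (ext_shift_period gr0 g0 R0 z0 z1 _ _ E0 Hz Kt Ks),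
    (ext_shift_period gr1 g1 R0 z0 z1 _ _ E1 Hz Kt Ks), (ext_shift_period gr2 g2 R0 z0 z1 _ _ E2 Hz Kt Ks).
  reflexivity.
Qed.

Theorem lemma3 (gr0 gr1 gr2 : R -> R -> R) (g0 g1 g2 : C * C -> C) (C0 R0 b : R) :
  biperiodic gr0 -> biperiodic gr1 -> biperiodic gr2 ->
  (* (A1) *)
  0 < C0 ->
  (forall t s t' s', inI t -> inI s -> inI t' -> inI s' ->
     rdist3 gr0 gr1 gr2 t s t' s' >= C0 * zeta (t - t') (s - s')) ->
  (* (A2) *)
  0 < R0 -> ext_of R0 gr0 g0 -> ext_of R0 gr1 g1 -> ext_of R0 gr2 g2 ->
  (* choice of b *)
  0 < b -> b < bmax C0 R0 g0 g1 g2 ->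
  exists c : R, 0 < c /\
    forall (z : C * C) (t s : R), inW (bstar b C0 R0 g0 g1 g2) z -> inI t -> inI s ->
      let w := cadd2 z (rpt t s) in
      Cmod (cdot3 (csub3 (Gam g0 g1 g2 z) (Gam g0 g1 g2 w))
                  (ccross3 (dGam0 g0 g1 g2 w) (dGam1 g0 g1 g2 w)))
        <= c * (zeta t s) ^ 2.
Proof.
  intros _ _ _ _ _ HR0 E0 E1 E2 Hb Hbm.
  set (bs := bstar b C0 R0 g0 g1 g2). pose proof (bstar_bounds b C0 R0 g0 g1 g2 Hb Hbm) as Hbs. fold bs in Hbs.
  destruct (ext_bounded3 gr0 gr1 gr2 g0 g1 g2 R0 HR0 E0 E1 E2) as [G [HG [B0 [B1 B2]]]].
  set (A := 32 * G * (6 * (4 * G / (R0 - bs)) ^ 2) / (R0 - bs) ^ 2).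
  assert (HA : 0 <= A).
  { unfold A. apply Rdiv_le_0_compat; [|apply pow_lt; lra]. pose proof (pow2_ge_0 (4 * G / (R0 - bs))). nra. }
  exists (A + 1). split; [lra|].
  intros z t s Hz Ht Hs w.
  assert (Hw : inW bs w) by exact (inW_cadd2_rpt bs z t s Hz).
  destruct (rep2pi_le_zeta t s Ht Hs) as [Zt Zs].
  rewrite <- (Gam_shift_period gr0 gr1 gr2 g0 g1 g2 R0 z t s E0 E1 E2 (inW_inWcl bs R0 z Hz ltac:(lra)) Ht Hs).
  eapply Rle_trans.
  - exact (chord_dot_normal_le_uniform gr0 gr1 gr2 g0 g1 g2 R0 bs G E0 E1 E2 ltac:(lra) B0 B1 B2 w _ _ (zeta t s) Hw Zt Zs).
  - pose proof (pow2_ge_0 (zeta t s)). fold A. nra.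
Qed.
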